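(* Let $\lambda \geq 1$, $\mu \geq 0$, $\delta \geq 0$, $t\in\left(\tfrac12,1\right)$ and $\xi=\frac{2\lambda+\mu}{2\lambda+1}$. Let $f(z)=z+\sum_{n=2}^{\infty}a_n z^n$ belong to the class $\mathscr{B}_{\Sigma}^{\mu}(\lambda,\delta,t)$ defined below. Then \[ |a_{2}|\leq \frac{2t\sqrt{2t}}{\sqrt{\left|(\lambda+\mu+2\xi\delta)^{2}-2\left[2(\lambda+\mu +2\xi\delta)^{2}- (2\lambda + \mu)(\mu+1)-12 \xi\delta\right]t^{2}\right|}} \] and \[ |a_{3}|\leq \frac{4t^{2}}{(\lambda + \mu +2\xi\delta )^{2}}+\frac{2t}{2\lambda+\mu +6\xi\delta}. \]
   Context: Let $\mathbb{U}=\{z\in\mathbb{C}:|z|<1\}$ and let $\mathcal{A}$ be the class of analytic functions $f$ on $\mathbb{U}$ with $f(0)=0$, $f'(0)=1$, i.e. $f(z)=z+\sum_{n\ge2}a_nz^n$. A function $f\in\mathcal{A}$ is bi-univalent if $f$ is univalent on $\mathbb{U}$ and its inverse $g=f^{-1}$ (defined near $0$, with $f^{-1}(f(z))=z$, and $g(w)=w-a_2w^2+(2a_2^2-a_3)w^3-\cdots$) extends to a univalent function on $\mathbb{U}$; $\Sigma$ denotes the class of such $f$. For analytic $F,G$ on $\mathbb{U}$, $F\prec G$ (subordination) means there is an analytic $\omega$ on $\mathbb{U}$ with $\omega(0)=0$, $|\omega(z)|<1$ and $F=G\circ\omega$. The Chebyshev polynomials of the second kind are $U_0(t)=1$, $U_1(t)=2t$,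 $U_{n+1}(t)=2tU_n(t)-U_{n-1}(t)$, with generating function $H(z,t)=\frac{1}{1-2tz+z^2}=\sum_{n\ge0}U_n(t)z^n$. For $\lambda\ge1,\mu\ge0,\delta\ge0$, $t\in(\frac12,1)$ and $\xi=\frac{2\lambda+\mu}{2\lambda+1}$, the class $\mathscr{B}_{\Sigma}^{\mu}(\lambda,\delta,t)$ consists of all $f\in\Sigma$ such that, with $g=f^{-1}$, \[ (1-\lambda)\left(\tfrac{f(z)}{z}\right)^{\mu}+\lambda f'(z)\left(\tfrac{f(z)}{z}\right)^{\mu-1}+\xi\delta z f''(z)\prec H(z,t) \] and \[ (1-\lambda)\left(\tfrac{g(w)}{w}\right)^{\mu}+\lambda g'(w)\left(\tfrac{g(w)}{w}\right)^{\mu-1}+\xi\delta w g''(w)\prec H(w,t), \] where powers are taken with the principal branch equal to $1$ at the origin. *)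

From Stdlib Require Import Reals.
From Coquelicot Require Import Coquelicot.
Open Scope C_scope.

Definition inU (z : C) : Prop := (Cmod z < 1)%R.

Definition Cexp (z : C) : C :=
  ((exp (Re z) * cos (Im z))%R, (exp (Re z) * sin (Im z))%R).

Definition taylor_on_U (h : C -> C) (c : nat -> C) : Prop :=
  forall z, inU z -> @is_series C_AbsRing C_NormedModule (fun n => c n * z ^ n) (h z).

Definition analytic_U (h : C -> C) : Prop := exists c, taylor_on_U h c.

Definition Cderiv_at (h : C -> C) (z l : C) : Prop :=
  @is_derive C_AbsRing C_NormedModule h z l.

Definition univalent_U (h : C -> C) : Prop :=
  forall z w, inU z -> inU w -> h z = h w -> z = w.

Definition in_A (f : C -> C) (a : nat -> C) : Prop :=
  taylor_on_U f a /\ a 0%nat = 0 /\ a 1%nat = 1.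

Definition local_inverse (f g : C -> C) : Prop :=
  exists r : R, (0 < r)%R /\
    forall w, (Cmod w < r)%R -> inU (g w) /\ f (g w) = w.

Definition bi_univalent (f : C -> C) : Prop :=
  univalent_U f /\
  exists g, local_inverse f g /\ analytic_U g /\ univalent_U g.

Definition subordinate (F G : C -> C) : Prop :=
  exists om : C -> C, analytic_U om /\ om 0 = 0 /\
    (forall z, inU z -> inU (om z)) /\
    (forall z, inU z -> F z = G (om z)).

(* generating function of Chebyshev polynomials of the 2nd kind *)
Definition Hcheb (t : R) (z : C) : C := / (1 - 2 * RtoC t * z + z * z).

Definition xi (lam mu : R) : R := ((2 * lam + mu) / (2 * lam + 1))%R.

(* The subordination condition for h (= f or g):
   (1-lam)(h z/z)^mu + lam h'(z) (h z/z)^(mu-1) + xi delta z h''(z) < H(z,t),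
   where (h z / z)^s := exp(s L(z)), L the analytic branch of log(h(z)/z)
   on U with L(0) = 0. *)
Definition op_subord (lam mu del t : R) (h : C -> C) : Prop :=
  exists L h1 h2 : C -> C,
    analytic_U L /\ L 0 = 0 /\
    (forall z, inU z -> z <> 0 -> Cexp (L z) = h z / z) /\
    (forall z, inU z -> Cderiv_at h z (h1 z) /\ Cderiv_at h1 z (h2 z)) /\
    subordinate
      (fun z => (1 - RtoC lam) * Cexp (RtoC mu * L z)
                + RtoC lam * h1 z * Cexp ((RtoC mu - 1) * L z)
                + RtoC (xi lam mu) * RtoC del * z * h2 z)
      (Hcheb t).

Definition classB (mu lam del t : R) (f : C -> C) : Prop :=
  bi_univalent f /\
  op_subord lam mu del t f /\
  exists g, local_inverse f g /\ analytic_U g /\ univalent_U g /\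
            op_subord lam mu del t g.

From Stdlib Require Import Reals Lra Lia.
From Coquelicot Require Import Coquelicot.

(* For h = f and for h = g = f^-1 the class condition reads Phi_h = H(omega_h, t) with a
   Schwarz function omega_h, whose Taylor coefficients have modulus at most 1.  Comparing
   second order expansions at the origin gives, with A = lam + mu + 2 xi del,
   B = 2 lam + mu + 6 xi del and K = (mu - 1)(mu + 2 lam)/2,
     A a2 = 2 t c1,   B a3 + K a2^2 = 2 t c2 + (4 t^2 - 1) c1^2,
   and the same relations for the coefficients b2 = -a2, b3 = 2 a2^2 - a3 of g.  Subtracting
   and adding the two second relations gives a3 = a2^2 + t (c2 - d2) / B and
   a2^2 D = 4 t^3 (c2 + d2), from which both bounds follow.
   Expansions are the relation |F z - P z| <= K |z|^n near 0, which is compatible with sums,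
   products and composition and determines the coefficients of P.  The bound |c_n| <= 1 comes
   from averaging omega over the points r zeta^k, zeta a primitive root of unity. *)

Open Scope R_scope.

(** * Series estimates *)

Lemma norm_sum_n_le {K : AbsRing} {V : NormedModule K} (a : nat -> V) (b : nat -> R) N :
  (forall n, norm (a n) <= b n) -> norm (sum_n a N) <= sum_n b N.
Proof. intros H. eapply Rle_trans; [apply norm_sum_n_m|]. apply sum_n_m_le, H. Qed.

Lemma is_series_norm_le {K : AbsRing} {V : NormedModule K} (a : nat -> V) (b : nat -> R) l L :
  is_series a l -> is_series b L -> (forall n, norm (a n) <= b n) -> norm l <= L.
Proof.
  intros Ha Hb H.
  apply (is_lim_seq_le (fun N => norm (sum_n a N)) (sum_n b) (norm l) L); auto.
  - intros N. apply norm_sum_n_le, H.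
  - eapply filterlim_comp; [apply Ha|apply filterlim_norm].
Qed.

Lemma is_series_geom_scal (M q : R) :
  0 <= q < 1 -> is_series (fun k => M * q ^ k) (M / (1 - q)).
Proof.
  intros Hq. assert (G : is_series (fun k => q ^ k) (/ (1 - q)))
    by (apply is_series_geom; rewrite Rabs_pos_eq; lra).
  exact (is_series_scal_l M _ _ G).
Qed.

Lemma is_series_tail_le {K : AbsRing} {V : NormedModule K} (a : nat -> V) l N (M q : R) :
  is_series a l -> 0 <= q < 1 -> (forall k, norm (a (S N + k)%nat) <= M * q ^ k) ->
  norm (minus l (sum_n a N)) <= M / (1 - q).
Proof.
  intros Ha Hq Hb.
  apply (is_series_norm_le (fun k => a (S N + k)%nat) (fun k => M * q ^ k)); auto.
  - apply is_series_incr_n; [lia|]. simpl pred.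
    assert (Hcancel : forall {G : AbelianGroup} (x y : G), plus (minus x y) y = x).
    { intros G x y. unfold minus. rewrite <- plus_assoc, plus_opp_l, plus_zero_r. reflexivity. }
    erewrite (Hcancel (NormedModule.AbelianGroup K V)). exact Ha.
  - apply is_series_geom_scal, Hq.
Qed.

Lemma prefix_bounded (u : nat -> R) N : exists M, forall n, (n <= N)%nat -> u n <= M.
Proof.
  induction N as [|N [M HM]].
  - exists (u 0%nat). intros n Hn. replace n with 0%nat by lia. lra.
  - exists (Rmax M (u (S N))). intros n Hn.
    destruct (Nat.eq_dec n (S N)) as [->|Hne]; [apply Rmax_r|].
    eapply Rle_trans; [apply HM; lia|apply Rmax_l].
Qed.

Lemma is_series_terms_bounded {K : AbsRing} {V : NormedModule K} (a : nat -> V) l :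
  is_series a l -> exists M, forall n, norm (a n) <= M.
Proof.
  intros Ha.
  assert (Hev : eventually (fun N => ball_norm l 1 (sum_n a N))).
  { apply Ha, locally_le_locally_norm. exists (mkposreal 1 Rlt_0_1). auto. }
  destruct Hev as [N HN]. destruct (prefix_bounded (fun n => norm (a n)) N) as [M HM].
  exists (Rmax M 2). intros n. destruct (Compare_dec.le_lt_dec n N) as [Hn|Hn].
  - eapply Rle_trans; [apply HM, Hn|apply Rmax_l].
  - destruct n as [|n]; [lia|].
    assert (E : a (S n) = minus (sum_n a (S n)) (sum_n a n)).
    { rewrite sum_Sn. unfold minus. rewrite plus_comm, plus_assoc, plus_opp_l, plus_zero_l. reflexivity. }
    pose proof (HN (S n) ltac:(lia)) as B1. pose proof (HN n ltac:(lia)) as B2.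
    unfold ball_norm in B1, B2.
    rewrite E, (minus_trans l). eapply Rle_trans; [apply norm_triangle|].
    rewrite <- (norm_opp (minus l _)), opp_minus.
    pose proof (Rmax_r M 2). lra.
Qed.

Lemma Rle_0_of_le_linear (A B d : R) :
  (0 < d)%R -> (forall x, 0 < x < d -> A <= B * x)%R -> (A <= 0)%R.
Proof.
  intros Hd H. destruct (Rle_dec A 0) as [|HA]; auto. exfalso.
  pose proof (Rabs_pos B).
  pose proof (Rmin_l (d / 2) (A / (2 * (Rabs B + 1)))) as Hx1.
  pose proof (Rmin_r (d / 2) (A / (2 * (Rabs B + 1)))) as Hx2.
  set (x := Rmin (d / 2) (A / (2 * (Rabs B + 1)))) in *.
  assert (Hx0 : (0 < x)%R) by (apply Rmin_pos; apply Rdiv_lt_0_compat; lra).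
  assert (Hxd : (x < d)%R) by lra.
  assert (HxA : (x * (2 * (Rabs B + 1)) <= A)%R).
  { apply (Rmult_le_compat_r (2 * (Rabs B + 1))) in Hx2; [|lra].
    replace (A / (2 * (Rabs B + 1)) * (2 * (Rabs B + 1)))%R with A in Hx2 by (field; lra).
    exact Hx2. }
  pose proof (H x (conj Hx0 Hxd)). pose proof (Rle_abs B). nra.
Qed.

Open Scope C_scope.

(** * Agreement to order [n] at the origin *)

Definition near0 (P : C -> Prop) : Prop :=
  exists d, (0 < d)%R /\ forall z : C, z <> 0 -> (Cmod z < d)%R -> P z.

Global Instance near0_filter : Filter near0.
Proof.
  constructor.
  - exists 1%R. split; [lra|auto].
  - intros P Q [d1 [Hd1 HP]] [d2 [Hd2 HQ]]. exists (Rmin d1 d2).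
    split; [apply Rmin_pos; auto|]. intros z Hz Hzd.
    pose proof (Rmin_l d1 d2). pose proof (Rmin_r d1 d2).
    split; [apply HP|apply HQ]; auto; lra.
  - intros P Q HPQ [d [Hd HP]]. exists d. auto.
Qed.

Lemma near0_Cmod_lt d : (0 < d)%R -> near0 (fun z => (Cmod z < d)%R).
Proof. intros Hd. exists d. auto. Qed.

Lemma near0_neq0 : near0 (fun z => z <> 0).
Proof. exists 1%R. split; [lra|auto]. Qed.

Lemma near0_real P : near0 P -> exists d, (0 < d)%R /\ forall x : R, (0 < x < d)%R -> P (RtoC x).
Proof.
  intros [d [Hd HP]]. exists d. split; auto. intros x Hx. apply HP.
  - intros E. apply RtoC_inj in E. lra.
  - rewrite Cmod_R, Rabs_pos_eq; lra.
Qed.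

Definition agree_at0 (n : nat) (F G : C -> C) : Prop :=
  exists K, (0 <= K)%R /\ near0 (fun z => (Cmod (F z - G z) <= K * Cmod z ^ n)%R).

Definition bounded_at0 (F : C -> C) : Prop :=
  exists K, near0 (fun z => (Cmod (F z) <= K)%R).

Lemma agree_at0_sym n F G : agree_at0 n F G -> agree_at0 n G F.
Proof.
  intros [K [HK H]]. exists K. split; auto. revert H. apply filter_imp. intros z Hz.
  replace (G z - F z) with (- (F z - G z)) by ring. rewrite Cmod_opp. exact Hz.
Qed.

Lemma agree_at0_add n F1 G1 F2 G2 : agree_at0 n F1 G1 -> agree_at0 n F2 G2 ->
  agree_at0 n (fun z => F1 z + F2 z) (fun z => G1 z + G2 z).
Proof.
  intros [K1 [HK1 H1]] [K2 [HK2 H2]]. exists (K1 + K2)%R. split; [lra|].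
  generalize (filter_and _ _ H1 H2). apply filter_imp. intros z [B1 B2].
  replace (F1 z + F2 z - (G1 z + G2 z)) with ((F1 z - G1 z) + (F2 z - G2 z)) by ring.
  eapply Rle_trans; [apply Cmod_triangle|]. lra.
Qed.

Lemma agree_at0_trans n F G H : agree_at0 n F G -> agree_at0 n G H -> agree_at0 n F H.
Proof.
  intros H1 H2. destruct (agree_at0_add _ _ _ _ _ H1 H2) as [K [HK HFH]].
  exists K. split; auto. revert HFH. apply filter_imp. intros z Hz.
  replace (F z - H z) with (F z + G z - (G z + H z)) by ring. exact Hz.
Qed.

Lemma agree_at0_mul n F1 G1 F2 G2 : agree_at0 n F1 G1 -> agree_at0 n F2 G2 ->
  bounded_at0 F1 -> bounded_at0 G2 ->
  agree_at0 n (fun z => F1 z * F2 z) (fun z => G1 z * G2 z).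
Proof.
  intros [K1 [HK1 H1]] [K2 [HK2 H2]] [B1 HB1] [B2 HB2].
  set (B1' := Rmax B1 0). set (B2' := Rmax B2 0).
  assert (0 <= B1')%R by apply Rmax_r. assert (0 <= B2')%R by apply Rmax_r.
  exists (B1' * K2 + K1 * B2')%R. split; [nra|].
  generalize (filter_and _ _ (filter_and _ _ H1 H2) (filter_and _ _ HB1 HB2)).
  apply filter_imp. intros z [[D1 D2] [E1 E2]].
  replace (F1 z * F2 z - G1 z * G2 z) with (F1 z * (F2 z - G2 z) + (F1 z - G1 z) * G2 z) by ring.
  eapply Rle_trans; [apply Cmod_triangle|]. rewrite !Cmod_mult.
  assert (Cmod (F1 z) <= B1')%R by (eapply Rle_trans; [apply E1|apply Rmax_l]).
  assert (Cmod (G2 z) <= B2')%R by (eapply Rle_trans; [apply E2|apply Rmax_l]).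
  pose proof (Cmod_ge_0 (F1 z)). pose proof (Cmod_ge_0 (G2 z)).
  pose proof (Cmod_ge_0 (F2 z - G2 z)). pose proof (Cmod_ge_0 (F1 z - G1 z)).
  assert (0 <= Cmod z ^ n)%R by (apply pow_le, Cmod_ge_0).
  assert (Cmod (F1 z) * Cmod (F2 z - G2 z) <= B1' * (K2 * Cmod z ^ n))%R
    by (apply Rmult_le_compat; auto).
  assert (Cmod (F1 z - G1 z) * Cmod (G2 z) <= (K1 * Cmod z ^ n) * B2')%R
    by (apply Rmult_le_compat; auto).
  nra.
Qed.

Lemma agree_at0_of_factor n F G Q :
  near0 (fun z => F z - G z = z ^ n * Q z) -> bounded_at0 Q -> agree_at0 n F G.
Proof.
  intros HE [B HB]. exists (Rmax B 0). split; [apply Rmax_r|].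
  generalize (filter_and _ _ HE HB). apply filter_imp. intros z [E Hb].
  rewrite E, Cmod_mult, Cmod_pow, Rmult_comm.
  apply Rmult_le_compat_r; [apply pow_le, Cmod_ge_0|].
  eapply Rle_trans; [apply Hb|apply Rmax_l].
Qed.

Lemma agree_at0_of_near_eq n F G : near0 (fun z => F z = G z) -> agree_at0 n F G.
Proof.
  intros HE. apply (agree_at0_of_factor _ _ _ (fun _ => 0)).
  - revert HE. apply filter_imp. intros z ->. ring.
  - exists 0%R. apply filter_forall. intros. rewrite Cmod_0. lra.
Qed.

Lemma bounded_at0_const c : bounded_at0 (fun _ => c).
Proof. exists (Cmod c). apply filter_forall. intros. lra. Qed.

Lemma bounded_at0_id : bounded_at0 (fun z => z).
Proof. exists 1%R. exists 1%R. split; [lra|]. intros. lra. Qed.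

Lemma bounded_at0_add F G : bounded_at0 F -> bounded_at0 G -> bounded_at0 (fun z => F z + G z).
Proof.
  intros [K1 H1] [K2 H2]. exists (K1 + K2)%R.
  generalize (filter_and _ _ H1 H2). apply filter_imp. intros z [B1 B2].
  eapply Rle_trans; [apply Cmod_triangle|]. lra.
Qed.

Lemma bounded_at0_mul F G : bounded_at0 F -> bounded_at0 G -> bounded_at0 (fun z => F z * G z).
Proof.
  intros [K1 H1] [K2 H2]. exists (Rmax K1 0 * Rmax K2 0)%R.
  generalize (filter_and _ _ H1 H2). apply filter_imp. intros z [B1 B2].
  rewrite Cmod_mult. apply Rmult_le_compat; try apply Cmod_ge_0.
  - eapply Rle_trans; [apply B1|apply Rmax_l].
  - eapply Rle_trans; [apply B2|apply Rmax_l].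
Qed.

Lemma bounded_at0_opp F : bounded_at0 F -> bounded_at0 (fun z => - F z).
Proof. intros [K H]. exists K. revert H. apply filter_imp. intros z. rewrite Cmod_opp. auto. Qed.

Ltac bounded_at0_poly :=
  unfold Cminus, Cdiv;
  repeat first [ apply bounded_at0_add | apply bounded_at0_mul | apply bounded_at0_opp
               | apply bounded_at0_id | apply bounded_at0_const ].

Lemma bounded_at0_agree n F G : agree_at0 n F G -> bounded_at0 G -> bounded_at0 F.
Proof.
  intros [K [HK H]] [B HB]. exists (K + B)%R.
  generalize (filter_and _ _ (filter_and _ _ H HB) (near0_Cmod_lt 1 Rlt_0_1)).
  apply filter_imp. intros z [[D E] Hz].
  assert (Cmod z ^ n <= 1)%R by (rewrite <- (pow1 n); apply pow_incr; split; [apply Cmod_ge_0|lra]).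
  replace (F z) with ((F z - G z) + G z) by ring.
  eapply Rle_trans; [apply Cmod_triangle|]. nra.
Qed.

Lemma agree_at0_weaken m n F G : (m <= n)%nat -> agree_at0 n F G -> agree_at0 m F G.
Proof.
  intros Hmn [K [HK H]]. exists K. split; auto.
  generalize (filter_and _ _ H (near0_Cmod_lt 1 Rlt_0_1)). apply filter_imp. intros z [D Hz].
  eapply Rle_trans; [apply D|]. apply Rmult_le_compat_l; auto.
  replace n with (m + (n - m))%nat by lia. rewrite pow_add.
  pose proof (Cmod_ge_0 z). assert (0 <= Cmod z ^ m)%R by (apply pow_le; lra).
  assert (Cmod z ^ (n - m) <= 1)%R by (rewrite <- (pow1 (n - m)); apply pow_incr; lra).
  nra.
Qed.

Lemma agree_at0_comp n Phi Psi u :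
  agree_at0 n Phi Psi -> Phi 0 = Psi 0 -> agree_at0 1 u (fun _ => 0) ->
  agree_at0 n (fun z => Phi (u z)) (fun z => Psi (u z)).
Proof.
  intros [K [HK [d [Hd H]]]] H0 [L [HL Hu]].
  exists (K * L ^ n)%R. split; [apply Rmult_le_pos; auto; apply pow_le; lra|].
  generalize (filter_and _ _ Hu (near0_Cmod_lt (d / (L + 1)) ltac:(apply Rdiv_lt_0_compat; lra))).
  apply filter_imp. intros z [Huz Hz].
  replace (u z - 0) with (u z) in Huz by ring. rewrite pow_1 in Huz.
  pose proof (Cmod_ge_0 z). pose proof (Cmod_ge_0 (u z)).
  (* [near0] says nothing at [0], so the points where [u] vanishes need [Phi 0 = Psi 0]. *)
  destruct (Ceq_dec (u z) 0) as [E|E].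
  - rewrite E, H0. replace (Psi 0 - Psi 0) with (RtoC 0) by ring. rewrite Cmod_0.
    apply Rmult_le_pos; [apply Rmult_le_pos; auto; apply pow_le; lra|apply pow_le; lra].
  - assert (Cmod (u z) < d)%R.
    { apply (Rle_lt_trans _ (L * Cmod z)); [exact Huz|].
      apply (Rle_lt_trans _ ((L + 1) * Cmod z)); [nra|].
      apply (Rmult_lt_compat_l (L + 1)) in Hz; [|lra].
      replace ((L + 1) * (d / (L + 1)))%R with d in Hz by (field; lra). lra. }
    eapply Rle_trans; [apply H; auto|].
    rewrite Rmult_assoc, <- Rpow_mult_distr. apply Rmult_le_compat_l; auto.
    apply pow_incr. split; auto.
Qed.

Lemma agree_at0_cancel_z n F G :
  agree_at0 (S n) (fun z => z * F z) (fun z => z * G z) -> agree_at0 n F G.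
Proof.
  intros [K [HK H]]. exists K. split; auto.
  generalize (filter_and _ _ H near0_neq0). apply filter_imp. intros z [Hb Hz].
  replace (z * F z - z * G z) with (z * (F z - G z)) in Hb by ring.
  rewrite Cmod_mult in Hb. simpl in Hb.
  assert (0 < Cmod z)%R by (apply Cmod_gt_0; auto). nra.
Qed.

Lemma agree_at0_const_eq0 n a B :
  agree_at0 (S n) (fun z => a + z * B z) (fun _ => 0) -> bounded_at0 B -> a = 0.
Proof.
  intros [K [HK H]] [KB HB].
  destruct (near0_real _ (filter_and _ _ (filter_and _ _ H HB) (near0_Cmod_lt 1 Rlt_0_1)))
    as [d [Hd Hx]].
  apply Cmod_eq_0. apply Rle_antisym; [|apply Cmod_ge_0].
  apply (Rle_0_of_le_linear _ (K + KB) d Hd). intros x Hxd.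
  destruct (Hx x Hxd) as [[Hax Hbx] Hx1]. rewrite Cmod_R, Rabs_pos_eq in Hax, Hx1 by lra.
  replace (a + x * B x - 0) with (a + x * B x) in Hax by ring.
  assert (Ha : (Cmod a <= Cmod (a + x * B x) + x * Cmod (B x))%R).
  { replace a with ((a + x * B x) + - (x * B x)) at 1 by ring.
    eapply Rle_trans; [apply Cmod_triangle|].
    rewrite Cmod_opp, Cmod_mult, Cmod_R, Rabs_pos_eq by lra. lra. }
  assert (x ^ S n <= x)%R.
  { simpl. assert (x ^ n <= 1)%R by (rewrite <- (pow1 n); apply pow_incr; lra).
    pose proof (pow_le x n). nra. }
  pose proof (Cmod_ge_0 (B x)). nra.
Qed.

Lemma agree_at0_eq_l n F F' G : (forall z, F z = F' z) -> agree_at0 n F G -> agree_at0 n F' G.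
Proof.
  intros E H. apply (agree_at0_trans _ _ F); auto.
  apply agree_at0_of_near_eq, filter_forall. intros z. symmetry. apply E.
Qed.

Lemma agree_at0_eq_r n F G G' : agree_at0 n F G -> (forall z, G z = G' z) -> agree_at0 n F G'.
Proof.
  intros H E. apply (agree_at0_trans _ _ G); auto.
  apply agree_at0_of_near_eq, filter_forall. exact E.
Qed.

Lemma agree_at0_sub0 n F G : agree_at0 n F G -> agree_at0 n (fun z => F z - G z) (fun _ => 0).
Proof.
  intros [K [HK H]]. exists K. split; auto. revert H. apply filter_imp. intros z.
  replace (F z - G z - 0) with (F z - G z) by ring. auto.
Qed.

Lemma agree_at0_peel n a B :
  agree_at0 (S n) (fun z => a + z * B z) (fun _ => 0) -> bounded_at0 B ->
  a = 0 /\ agree_at0 n B (fun _ => 0).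
Proof.
  intros H HB. assert (Ha : a = 0) by exact (agree_at0_const_eq0 _ _ _ H HB).
  split; auto. subst a. apply agree_at0_cancel_z.
  apply (agree_at0_eq_r _ _ (fun _ => 0)); [|intros; ring].
  revert H. apply agree_at0_eq_l. intros; ring.
Qed.

(** * Second and third order expansions at the origin *)

Definition quad (p0 p1 p2 : C) (z : C) : C := p0 + p1 * z + p2 * z * z.
Definition cubic (p0 p1 p2 p3 : C) (z : C) : C := p0 + p1 * z + p2 * z * z + p3 * z * z * z.

Definition expansion2 (F : C -> C) (p0 p1 p2 : C) : Prop := agree_at0 3 F (quad p0 p1 p2).
Definition expansion3 (F : C -> C) (p0 p1 p2 p3 : C) : Prop := agree_at0 4 F (cubic p0 p1 p2 p3).

Lemma quad_agree_at0_eq0 r0 r1 r2 :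
  agree_at0 3 (quad r0 r1 r2) (fun _ => 0) -> r0 = 0 /\ r1 = 0 /\ r2 = 0.
Proof.
  intros H.
  destruct (agree_at0_peel 2 r0 (fun z => r1 + z * r2)) as [E0 H1].
  { revert H. apply agree_at0_eq_l. intros; unfold quad; ring. }
  { bounded_at0_poly. }
  destruct (agree_at0_peel 1 r1 (fun _ => r2)) as [E1 H2]; [exact H1|bounded_at0_poly|].
  destruct (agree_at0_peel 0 r2 (fun _ => 0)) as [E2 _]; [|bounded_at0_poly|auto].
  revert H2. apply agree_at0_eq_l. intros; ring.
Qed.

Lemma cubic_agree_at0_eq0 r0 r1 r2 r3 :
  agree_at0 4 (cubic r0 r1 r2 r3) (fun _ => 0) -> r0 = 0 /\ r1 = 0 /\ r2 = 0 /\ r3 = 0.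
Proof.
  intros H.
  destruct (agree_at0_peel 3 r0 (quad r1 r2 r3)) as [E0 H1].
  { revert H. apply agree_at0_eq_l. intros; unfold cubic, quad; ring. }
  { unfold quad. bounded_at0_poly. }
  destruct (quad_agree_at0_eq0 _ _ _ H1) as [? [? ?]]. auto.
Qed.

Lemma bounded_at0_quad p0 p1 p2 : bounded_at0 (quad p0 p1 p2).
Proof. unfold quad. bounded_at0_poly. Qed.

Lemma bounded_at0_cubic p0 p1 p2 p3 : bounded_at0 (cubic p0 p1 p2 p3).
Proof. unfold cubic. bounded_at0_poly. Qed.

Lemma expansion2_unique F p0 p1 p2 q0 q1 q2 :
  expansion2 F p0 p1 p2 -> expansion2 F q0 q1 q2 -> p0 = q0 /\ p1 = q1 /\ p2 = q2.
Proof.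
  intros Hp Hq.
  pose proof (agree_at0_sub0 _ _ _ (agree_at0_trans _ _ _ _ (agree_at0_sym _ _ _ Hp) Hq)) as H.
  destruct (quad_agree_at0_eq0 (p0 - q0) (p1 - q1) (p2 - q2)) as [E0 [E1 E2]].
  { revert H. apply agree_at0_eq_l. intros; unfold quad; ring. }
  repeat split; apply Ceq_minus; assumption.
Qed.

Lemma expansion3_unique F p0 p1 p2 p3 q0 q1 q2 q3 :
  expansion3 F p0 p1 p2 p3 -> expansion3 F q0 q1 q2 q3 ->
  p0 = q0 /\ p1 = q1 /\ p2 = q2 /\ p3 = q3.
Proof.
  intros Hp Hq.
  pose proof (agree_at0_sub0 _ _ _ (agree_at0_trans _ _ _ _ (agree_at0_sym _ _ _ Hp) Hq)) as H.
  destruct (cubic_agree_at0_eq0 (p0 - q0) (p1 - q1) (p2 - q2) (p3 - q3)) as [E0 [E1 [E2 E3]]].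
  { revert H. apply agree_at0_eq_l. intros; unfold cubic; ring. }
  repeat split; apply Ceq_minus; assumption.
Qed.

Lemma expansion2_const c : expansion2 (fun _ => c) c 0 0.
Proof. apply agree_at0_of_near_eq, filter_forall. intros; unfold quad; ring. Qed.

Lemma expansion3_const c : expansion3 (fun _ => c) c 0 0 0.
Proof. apply agree_at0_of_near_eq, filter_forall. intros; unfold cubic; ring. Qed.

Lemma expansion2_id : expansion2 (fun z => z) 0 1 0.
Proof. apply agree_at0_of_near_eq, filter_forall. intros; unfold quad; ring. Qed.

Lemma expansion3_id : expansion3 (fun z => z) 0 1 0 0.
Proof. apply agree_at0_of_near_eq, filter_forall. intros; unfold cubic; ring. Qed.

Lemma expansion2_add F G p0 p1 p2 q0 q1 q2 :
  expansion2 F p0 p1 p2 -> expansion2 G q0 q1 q2 ->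
  expansion2 (fun z => F z + G z) (p0 + q0) (p1 + q1) (p2 + q2).
Proof.
  intros HF HG. eapply agree_at0_eq_r; [apply (agree_at0_add _ _ _ _ _ HF HG)|].
  intros; unfold quad; ring.
Qed.

Lemma expansion3_add F G p0 p1 p2 p3 q0 q1 q2 q3 :
  expansion3 F p0 p1 p2 p3 -> expansion3 G q0 q1 q2 q3 ->
  expansion3 (fun z => F z + G z) (p0 + q0) (p1 + q1) (p2 + q2) (p3 + q3).
Proof.
  intros HF HG. eapply agree_at0_eq_r; [apply (agree_at0_add _ _ _ _ _ HF HG)|].
  intros; unfold cubic; ring.
Qed.

Lemma expansion2_mul F G p0 p1 p2 q0 q1 q2 :
  expansion2 F p0 p1 p2 -> expansion2 G q0 q1 q2 ->
  expansion2 (fun z => F z * G z)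
    (p0 * q0) (p0 * q1 + p1 * q0) (p0 * q2 + p1 * q1 + p2 * q0).
Proof.
  intros HF HG. eapply agree_at0_trans.
  - apply (agree_at0_mul _ _ _ _ _ HF HG); [|apply bounded_at0_quad].
    eapply bounded_at0_agree; [apply HF|apply bounded_at0_quad].
  - apply (agree_at0_of_factor _ _ _ (fun z => p1 * q2 + p2 * q1 + p2 * q2 * z)).
    + apply filter_forall. intros; unfold quad; simpl; ring.
    + bounded_at0_poly.
Qed.

Lemma expansion3_mul F G p0 p1 p2 p3 q0 q1 q2 q3 :
  expansion3 F p0 p1 p2 p3 -> expansion3 G q0 q1 q2 q3 ->
  expansion3 (fun z => F z * G z)
    (p0 * q0) (p0 * q1 + p1 * q0) (p0 * q2 + p1 * q1 + p2 * q0)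
    (p0 * q3 + p1 * q2 + p2 * q1 + p3 * q0).
Proof.
  intros HF HG. eapply agree_at0_trans.
  - apply (agree_at0_mul _ _ _ _ _ HF HG); [|apply bounded_at0_cubic].
    eapply bounded_at0_agree; [apply HF|apply bounded_at0_cubic].
  - apply (agree_at0_of_factor _ _ _
      (fun z => p1 * q3 + p2 * q2 + p3 * q1 + (p2 * q3 + p3 * q2) * z + p3 * q3 * z * z)).
    + apply filter_forall. intros; unfold cubic; simpl; ring.
    + bounded_at0_poly.
Qed.

Lemma expansion2_scal c F p0 p1 p2 :
  expansion2 F p0 p1 p2 -> expansion2 (fun z => c * F z) (c * p0) (c * p1) (c * p2).
Proof.
  intros H. eapply agree_at0_eq_r; [apply (expansion2_mul _ _ _ _ _ _ _ _ (expansion2_const c) H)|].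
  intros; unfold quad; ring.
Qed.

Lemma expansion3_scal c F p0 p1 p2 p3 :
  expansion3 F p0 p1 p2 p3 ->
  expansion3 (fun z => c * F z) (c * p0) (c * p1) (c * p2) (c * p3).
Proof.
  intros H. eapply agree_at0_eq_r; [apply (expansion3_mul _ _ _ _ _ _ _ _ _ _ (expansion3_const c) H)|].
  intros; unfold cubic; ring.
Qed.

Lemma expansion2_agree1 u u1 u2 : expansion2 u 0 u1 u2 -> agree_at0 1 u (fun _ => 0).
Proof.
  intros H. apply (agree_at0_trans _ _ (quad 0 u1 u2)); [exact (agree_at0_weaken 1 3 _ _ ltac:(lia) H)|].
  apply (agree_at0_of_factor _ _ _ (fun z => u1 + u2 * z)).
  - apply filter_forall. intros; unfold quad; simpl; ring.
  - bounded_at0_poly.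
Qed.

Lemma expansion3_agree1 u u1 u2 u3 : expansion3 u 0 u1 u2 u3 -> agree_at0 1 u (fun _ => 0).
Proof.
  intros H. apply (agree_at0_trans _ _ (cubic 0 u1 u2 u3)); [exact (agree_at0_weaken 1 4 _ _ ltac:(lia) H)|].
  apply (agree_at0_of_factor _ _ _ (fun z => u1 + u2 * z + u3 * z * z)).
  - apply filter_forall. intros; unfold cubic; simpl; ring.
  - bounded_at0_poly.
Qed.

Lemma expansion2_comp Phi u p0 p1 p2 u1 u2 :
  expansion2 Phi p0 p1 p2 -> Phi 0 = p0 -> expansion2 u 0 u1 u2 ->
  expansion2 (fun z => Phi (u z)) p0 (p1 * u1) (p1 * u2 + p2 * u1 * u1).
Proof.
  intros HPhi H0 Hu. eapply agree_at0_trans.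
  - apply (agree_at0_comp _ _ _ _ HPhi); [unfold quad; rewrite H0; ring|].
    exact (expansion2_agree1 _ _ _ Hu).
  - pose proof (expansion2_add _ _ _ _ _ _ _ _
      (expansion2_add _ _ _ _ _ _ _ _ (expansion2_const p0) (expansion2_scal p1 _ _ _ _ Hu))
      (expansion2_scal p2 _ _ _ _ (expansion2_mul _ _ _ _ _ _ _ _ Hu Hu))) as H.
    eapply agree_at0_eq_l; [|eapply agree_at0_eq_r; [exact H|]]; intros; unfold quad; ring.
Qed.

Lemma expansion3_comp Phi u p0 p1 p2 p3 u1 u2 u3 :
  expansion3 Phi p0 p1 p2 p3 -> Phi 0 = p0 -> expansion3 u 0 u1 u2 u3 ->
  expansion3 (fun z => Phi (u z)) p0 (p1 * u1) (p1 * u2 + p2 * u1 * u1)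
    (p1 * u3 + 2 * p2 * u1 * u2 + p3 * u1 * u1 * u1).
Proof.
  intros HPhi H0 Hu. eapply agree_at0_trans.
  - apply (agree_at0_comp _ _ _ _ HPhi); [unfold cubic; rewrite H0; ring|].
    exact (expansion3_agree1 _ _ _ _ Hu).
  - pose proof (expansion3_mul _ _ _ _ _ _ _ _ _ _ Hu Hu) as Hu2.
    pose proof (expansion3_mul _ _ _ _ _ _ _ _ _ _ Hu2 Hu) as Hu3.
    pose proof (expansion3_add _ _ _ _ _ _ _ _ _ _
      (expansion3_add _ _ _ _ _ _ _ _ _ _
        (expansion3_add _ _ _ _ _ _ _ _ _ _ (expansion3_const p0) (expansion3_scal p1 _ _ _ _ _ Hu))
        (expansion3_scal p2 _ _ _ _ _ Hu2))
      (expansion3_scal p3 _ _ _ _ _ Hu3)) as H.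
    eapply agree_at0_eq_l; [|eapply agree_at0_eq_r; [exact H|]]; intros; unfold cubic; ring.
Qed.

Lemma expansion3_expansion2 F p0 p1 p2 p3 :
  expansion3 F p0 p1 p2 p3 -> expansion2 F p0 p1 p2.
Proof.
  intros H. apply (agree_at0_trans _ _ (cubic p0 p1 p2 p3)); [exact (agree_at0_weaken 3 4 _ _ ltac:(lia) H)|].
  apply (agree_at0_of_factor _ _ _ (fun _ => p3)).
  - apply filter_forall. intros; unfold cubic, quad; simpl; ring.
  - bounded_at0_poly.
Qed.

Lemma expansion3_div_z F p1 p2 p3 :
  expansion3 F 0 p1 p2 p3 -> expansion2 (fun z => F z / z) p1 p2 p3.
Proof.
  intros H. apply agree_at0_cancel_z.
  apply (agree_at0_trans _ _ F).
  - apply agree_at0_of_near_eq. generalize near0_neq0. apply filter_imp.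
    intros z Hz. field. exact Hz.
  - eapply agree_at0_eq_r; [exact H|]. intros; unfold cubic, quad; ring.
Qed.

(** * Power series near the origin *)

Ltac ring_C := match goal with |- ?a = ?b => change (a = b :> C) end; ring.

Definition coef_growth (c : nat -> C) (M Rb : R) : Prop :=
  (0 <= M)%R /\ (1 <= Rb)%R /\ forall n, (Cmod (c n) <= M * Rb ^ n)%R.

Definition series_on (h : C -> C) (c : nat -> C) (r : R) : Prop :=
  forall z, (Cmod z < r)%R -> is_series (fun n => c n * z ^ n) (h z).

Lemma taylor_coef_bound h c (rho : R) : taylor_on_U h c -> (0 < rho < 1)%R ->
  exists M, (0 <= M)%R /\ forall n, (Cmod (c n) * rho ^ n <= M)%R.
Proof.
  intros Ht Hr.
  assert (Hin : inU (RtoC rho)) by (unfold inU; rewrite Cmod_R, Rabs_pos_eq; lra).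
  destruct (is_series_terms_bounded _ _ (Ht _ Hin)) as [M HM].
  exists (Rmax M 0). split; [apply Rmax_r|]. intros n.
  eapply Rle_trans; [|apply Rmax_l]. specialize (HM n).
  change (norm ?x) with (Cmod x) in HM.
  rewrite Cmod_mult, Cmod_pow, Cmod_R, Rabs_pos_eq in HM by lra. exact HM.
Qed.

Lemma taylor_coef_growth h c : taylor_on_U h c -> exists M, coef_growth c M 2 /\ series_on h c (/16).
Proof.
  intros Ht. destruct (taylor_coef_bound h c (1/2) Ht ltac:(lra)) as [M [HM H]].
  exists M. split; [split; [auto|split; [lra|]]|].
  - intros n. specialize (H n).
    assert (E : ((1/2) ^ n * 2 ^ n = 1)%R)
      by (rewrite <- Rpow_mult_distr; replace (1/2*2)%R with 1%R by field; apply pow1).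
    assert (0 < 2 ^ n)%R by (apply pow_lt; lra).
    apply (Rmult_le_compat_r (2 ^ n)) in H; [|lra]. rewrite Rmult_assoc, E, Rmult_1_r in H. exact H.
  - intros z Hz. apply Ht. unfold inU. lra.
Qed.

Lemma series_on_le h c r r' : (r' <= r)%R -> series_on h c r -> series_on h c r'.
Proof. intros H Hs z Hz. apply Hs. lra. Qed.

Lemma coef_growth_term_le c M Rb z n :
  coef_growth c M Rb -> (Cmod (c n * z ^ n) <= M * (Rb * Cmod z) ^ n)%R.
Proof.
  intros [HM [HR Hc]]. rewrite Cmod_mult, Cmod_pow, Rpow_mult_distr, <- Rmult_assoc.
  apply Rmult_le_compat_r; [apply pow_le, Cmod_ge_0|apply Hc].
Qed.

Lemma INR_S_le_pow2 n : (INR (S n) <= 2 ^ n)%R.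
Proof.
  induction n as [|n IH]; [simpl; lra|].
  rewrite S_INR. simpl pow. assert (1 <= 2 ^ n)%R by (apply pow_R1_Rle; lra). lra.
Qed.

Lemma INR_SS_sqr_le_pow4 n : (INR (S (S n)) ^ 2 <= 4 * 4 ^ n)%R.
Proof.
  induction n as [|n IH]; [simpl; lra|].
  rewrite (S_INR (S (S n))).
  assert (1 <= INR (S (S n)))%R by (rewrite S_INR; pose proof (pos_INR (S n)); lra).
  change (4 ^ S n)%R with (4 * 4 ^ n)%R. nra.
Qed.

Definition derived_coef (c : nat -> C) (n : nat) : C := INR (S n) * c (S n).

Lemma derived_coef_growth c M Rb :
  coef_growth c M Rb -> coef_growth (derived_coef c) (M * Rb) (2 * Rb).
Proof.
  intros [HM [HR H]]. split; [nra|split; [lra|]].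
  intros n. unfold derived_coef. rewrite Cmod_mult, Cmod_R, Rabs_pos_eq by apply pos_INR.
  eapply Rle_trans.
  { apply Rmult_le_compat; [apply pos_INR|apply Cmod_ge_0|apply INR_S_le_pow2|apply H]. }
  rewrite Rpow_mult_distr. simpl. right; ring.
Qed.

Definition pow_remainder (w z : C) (n : nat) : C :=
  w ^ n - z ^ n - INR n * z ^ pred n * (w - z).

Lemma pow_remainder_01 w z : pow_remainder w z 0 = 0 /\ pow_remainder w z 1 = 0.
Proof. unfold pow_remainder. simpl. split; ring. Qed.

Lemma pow_remainder_SSS w z n :
  pow_remainder w z (S (S (S n))) =
  w * pow_remainder w z (S (S n)) + INR (S (S n)) * z ^ S n * (w - z) * (w - z).
Proof. unfold pow_remainder. simpl pred. rewrite !S_INR, !RtoC_plus. simpl. ring. Qed.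

Lemma pow_remainder_le w z (rho : R) n : (Cmod w <= rho)%R -> (Cmod z <= rho)%R ->
  (Cmod (pow_remainder w z (S (S n))) <= INR (S (S n)) ^ 2 * rho ^ n * Cmod (w - z) ^ 2)%R.
Proof.
  intros Hw Hz. pose proof (Cmod_ge_0 z). pose proof (Cmod_ge_0 w).
  set (d := Cmod (w - z)). assert (Hd : (0 <= d)%R) by apply Cmod_ge_0.
  induction n as [|n IH].
  - replace (pow_remainder w z 2) with ((w - z) * (w - z))
      by (unfold pow_remainder; simpl; rewrite RtoC_plus; ring).
    rewrite Cmod_mult. simpl. fold d. nra.
  - rewrite pow_remainder_SSS. eapply Rle_trans; [apply Cmod_triangle|].
    rewrite !Cmod_mult, Cmod_pow, Cmod_R, Rabs_pos_eq by apply pos_INR. fold d.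
    rewrite (S_INR (S (S n))).
    set (I := INR (S (S n))). assert (HI : (0 <= I)%R) by apply pos_INR.
    assert (Hp : (0 <= rho ^ n)%R) by (apply pow_le; lra).
    assert (Hzp : (Cmod z ^ S n <= rho * rho ^ n)%R) by (apply (pow_incr _ _ (S n)); lra).
    assert (T1 : (Cmod w * Cmod (pow_remainder w z (S (S n))) <= rho * (I ^ 2 * rho ^ n * d ^ 2))%R)
      by (apply Rmult_le_compat; auto; apply Cmod_ge_0).
    assert (T2 : (I * Cmod z ^ S n * d * d <= I * (rho * rho ^ n) * (d * d))%R).
    { rewrite (Rmult_assoc _ d d). apply Rmult_le_compat_r; [nra|]. apply Rmult_le_compat_l; auto. }
    change (rho ^ S n)%R with (rho * rho ^ n)%R.
    assert (0 <= rho * rho ^ n * d ^ 2)%R by (apply Rmult_le_pos; [apply Rmult_le_pos|apply pow2_ge_0]; lra).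
    nra.
Qed.

Lemma is_derive_of_quadratic_remainder (h : C -> C) z D K r :
  (Cmod z < r)%R -> (0 <= K)%R ->
  (forall w, (Cmod w < r)%R -> (Cmod ((h w - h z - (w - z) * D)%C) <= K * Cmod (w - z) ^ 2)%R) ->
  is_derive h z D.
Proof.
  intros Hz HK H. split; [apply is_linear_scal_l|].
  intros x Hx.
  assert (Hzx : z = x)
    by exact (@is_filter_lim_locally_unique C_AbsRing (AbsRing_NormedModule C_AbsRing) _ _ Hx).
  subst x. intros eps. pose proof (cond_pos eps).
  assert (Hd : (0 < Rmin (r - Cmod z) (eps / (K + 1)))%R)
    by (apply Rmin_pos; [lra|apply Rdiv_lt_0_compat; lra]).
  exists (mkposreal _ Hd). intros y Hy. change C in y.
  change (Cmod (y - z) < Rmin (r - Cmod z) (eps / (K + 1)))%R in Hy.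
  change (Cmod (h y - h z - (y - z) * D) <= eps * Cmod (y - z))%R.
  pose proof (Rmin_l (r - Cmod z) (eps / (K + 1))) as Hy1.
  pose proof (Rmin_r (r - Cmod z) (eps / (K + 1))) as Hy2.
  assert (Hyr : (Cmod y < r)%R).
  { pose proof (Cmod_triangle (y - z) z) as Ht. replace (y - z + z) with y in Ht by ring. lra. }
  eapply Rle_trans; [apply H, Hyr|].
  assert (K * Cmod (y - z) <= eps)%R.
  { set (e := (eps / (K + 1))%R) in *.
    assert (Ee : pos eps = (e * (K + 1))%R) by (unfold e; field; lra).
    assert (0 < e)%R by (unfold e; apply Rdiv_lt_0_compat; lra).
    rewrite Ee. pose proof (Cmod_ge_0 (y - z)). nra. }
  pose proof (Cmod_ge_0 (y - z)). simpl. nra.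
Qed.

Section PowerSeries.

Variables (h : C -> C) (c : nat -> C) (M Rb r : R).
Hypothesis Hc : coef_growth c M Rb.
Hypothesis Hr : (0 < r)%R.
Hypothesis HrR : (8 * Rb * r <= 1)%R.
Hypothesis Hs : series_on h c r.

Lemma series_tail_le K z : (Cmod z < r)%R ->
  (Cmod ((h z - sum_n (fun n => c n * z ^ n) K)%C) <= 2 * M * (Rb * Cmod z) ^ (S K))%R.
Proof.
  intros Hz. pose proof Hc as [HM [HR _]]. pose proof (Cmod_ge_0 z) as Hz0.
  set (q := (Rb * Cmod z)%R).
  assert (Hq : (0 <= q <= /8)%R) by (unfold q; split; nra).
  assert (Htail := is_series_tail_le (fun n => c n * z ^ n) (h z) K (M * q ^ S K) (/8)
                 (Hs z Hz) ltac:(lra)).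
  change (norm ?x) with (Cmod x) in Htail.
  eapply Rle_trans; [apply Htail|].
  - intros k. change (norm ?x) with (Cmod x).
    eapply Rle_trans; [apply coef_growth_term_le, Hc|]. fold q.
    rewrite pow_add, Rmult_assoc. apply Rmult_le_compat_l; auto.
    apply Rmult_le_compat_l; [apply pow_le; lra|]. apply pow_incr; lra.
  - assert (0 <= M * q ^ S K)%R by (apply Rmult_le_pos; [lra|apply pow_le; lra]).
    unfold Rdiv. replace (/ (1 - /8))%R with (8/7)%R by field. lra.
Qed.

Lemma series_at0 : h 0 = c 0%nat.
Proof.
  pose proof (series_tail_le 0 0 ltac:(rewrite Cmod_0; lra)) as H.
  rewrite sum_O, Cmod_0, Rmult_0_r, pow_i, Rmult_0_r in H by lia. simpl in H.
  apply Ceq_minus, Cmod_eq_0. replace (c 0%nat) with (c 0%nat * 1) by ring.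
  apply Rle_antisym; [exact H|apply Cmod_ge_0].
Qed.

Lemma series_expansion3 : expansion3 h (c 0%nat) (c 1%nat) (c 2%nat) (c 3%nat).
Proof.
  pose proof Hc as [HM [HR _]]. exists (2 * M * Rb ^ 4)%R.
  split; [apply Rmult_le_pos; [lra|apply pow_le; lra]|].
  exists r. split; auto. intros z _ Hz.
  pose proof (series_tail_le 3 z Hz) as H. rewrite !sum_Sn, sum_O in H.
  replace (h z - cubic (c 0%nat) (c 1%nat) (c 2%nat) (c 3%nat) z) with
    (h z - plus (plus (plus (c 0%nat * z ^ 0) (c 1%nat * z ^ 1)) (c 2%nat * z ^ 2)) (c 3%nat * z ^ 3))
    by (unfold cubic; simpl; change plus with Cplus; ring).
  eapply Rle_trans; [apply H|]. rewrite Rpow_mult_distr. right; ring.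
Qed.

Lemma series_expansion2 : expansion2 h (c 0%nat) (c 1%nat) (c 2%nat).
Proof. exact (expansion3_expansion2 _ _ _ _ _ series_expansion3). Qed.

Lemma derived_series_converges z :
  (Cmod z < r)%R -> ex_series (fun n => derived_coef c n * z ^ n).
Proof.
  intros Hz. pose proof Hc as [HM [HR _]]. pose proof (Cmod_ge_0 z).
  apply (@ex_series_le C_AbsRing C_CompleteNormedModule _ (fun n => M * Rb * (/4) ^ n)%R).
  - intros n. change (norm ?x) with (Cmod x).
    eapply Rle_trans; [apply coef_growth_term_le, derived_coef_growth, Hc|].
    apply Rmult_le_compat_l; [nra|]. apply pow_incr. nra.
  - eexists. apply is_series_geom_scal. lra.
Qed.

Lemma pow_remainder_term_le z w n : (Cmod z < r)%R -> (Cmod w < r)%R ->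
  (Cmod (c n * pow_remainder w z n) <= 16 * M * Rb ^ 2 * Cmod (w - z) ^ 2 * (/2) ^ n)%R.
Proof.
  intros Hz Hw. pose proof Hc as [HM [HR Hcb]].
  set (dd := Cmod (w - z)). assert (Hdd : (0 <= dd ^ 2)%R) by apply pow2_ge_0.
  rewrite Cmod_mult.
  assert (0 <= 16 * M * Rb ^ 2 * dd ^ 2 * (/2) ^ n)%R
    by (apply Rmult_le_pos; [|apply pow_le; lra]; apply Rmult_le_pos; nra).
  destruct n as [|[|m]].
  - rewrite (proj1 (pow_remainder_01 w z)), Cmod_0, Rmult_0_r. auto.
  - rewrite (proj2 (pow_remainder_01 w z)), Cmod_0, Rmult_0_r. auto.
  - pose proof (pow_remainder_le w z r m ltac:(lra) ltac:(lra)) as HE. fold dd in HE.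
    pose proof (INR_SS_sqr_le_pow4 m).
    assert (Hrm : (Rb ^ m * r ^ m <= (/8) ^ m)%R) by (rewrite <- Rpow_mult_distr; apply pow_incr; nra).
    assert (0 <= Rb ^ m)%R by (apply pow_le; lra). assert (0 <= r ^ m)%R by (apply pow_le; lra).
    assert (0 <= (/8) ^ m)%R by (apply pow_le; lra). assert (0 <= 4 ^ m)%R by (apply pow_le; lra).
    eapply Rle_trans; [apply Rmult_le_compat; [apply Cmod_ge_0|apply Cmod_ge_0|apply Hcb|apply HE]|].
    replace ((/2) ^ S (S m))%R with (/4 * (4 ^ m * (/8) ^ m))%R
      by (rewrite <- Rpow_mult_distr; simpl; replace (4 * /8)%R with (/2)%R by field; field).
    replace (M * Rb ^ S (S m) * (INR (S (S m)) ^ 2 * r ^ m * dd ^ 2))%R with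
      (M * Rb ^ 2 * dd ^ 2 * (INR (S (S m)) ^ 2 * (Rb ^ m * r ^ m)))%R by (simpl; ring).
    replace (16 * M * Rb ^ 2 * dd ^ 2 * (/ 4 * (4 ^ m * (/ 8) ^ m)))%R with
      (M * Rb ^ 2 * dd ^ 2 * ((4 * 4 ^ m) * (/ 8) ^ m))%R by field.
    apply Rmult_le_compat_l; [apply Rmult_le_pos; nra|].
    apply Rmult_le_compat; auto; [apply pow2_ge_0|apply Rmult_le_pos; auto].
Qed.

Lemma series_remainder_le z w D : (Cmod z < r)%R -> (Cmod w < r)%R ->
  is_series (fun n => derived_coef c n * z ^ n) D ->
  (Cmod ((h w - h z - (w - z) * D)%C) <= 32 * M * Rb ^ 2 * Cmod (w - z) ^ 2)%R.
Proof.
  intros Hz Hw HD.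
  assert (HD' : is_series (fun n => c n * (INR n * z ^ pred n)) D).
  { apply is_series_decr_1.
    assert (E : forall x, x = D -> is_series (fun n => c (S n) * (INR (S n) * z ^ pred (S n))) x).
    { intros x ->. eapply is_series_ext; [|exact HD]. intros n. unfold derived_coef. simpl pred. ring_C. }
    apply E. change (D + - (c 0%nat * (INR 0 * z ^ pred 0)) = D). simpl. ring. }
  assert (HT : is_series (fun n => c n * pow_remainder w z n) (h w - h z - (w - z) * D)).
  { eapply is_series_ext;
      [|exact (is_series_minus _ _ _ _ (is_series_minus _ _ _ _ (Hs w Hw) (Hs z Hz))
                 (@is_series_scal C_AbsRing C_NormedModule (w - z) _ _ HD'))].
    intros n. unfold pow_remainder, minus, plus, opp, scal. simpl.
    change (@mult C_Ring ?a ?b) with (Cmult a b). ring_C. }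
  eapply Rle_trans.
  - apply (is_series_norm_le _ _ _ _ HT
      (is_series_geom_scal (16 * M * Rb ^ 2 * Cmod (w - z) ^ 2) (/2) ltac:(lra))).
    intros n. apply pow_remainder_term_le; auto.
  - right. field.
Qed.

Lemma series_is_derive z : (Cmod z < r)%R ->
  exists D, is_series (fun n => derived_coef c n * z ^ n) D /\ is_derive h z D.
Proof.
  intros Hz. destruct (derived_series_converges z Hz) as [D HD]. exists D. split; auto.
  pose proof Hc as [HM _].
  apply (is_derive_of_quadratic_remainder h z D (32 * M * Rb ^ 2) r Hz).
  - apply Rmult_le_pos; [lra|apply pow2_ge_0].
  - intros w Hw. apply series_remainder_le; auto.
Qed.

End PowerSeries.

Lemma series_on_derive (h h1 : C -> C) c M Rb r :
  coef_growth c M Rb -> (0 < r)%R -> (8 * Rb * r <= 1)%R -> series_on h c r ->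
  (forall z, (Cmod z < r)%R -> is_derive h z (h1 z)) -> series_on h1 (derived_coef c) r.
Proof.
  intros Hc Hr HrR Hs Hd z Hz.
  destruct (series_is_derive h c M Rb r Hc Hr HrR Hs z Hz) as [D [HD1 HD2]].
  replace (h1 z) with D; auto.
  rewrite <- (is_C_derive_unique _ _ _ HD2). apply is_C_derive_unique, Hd, Hz.
Qed.

(** * The exponential and the Chebyshev generating function *)

Open Scope R_scope.

Lemma Rabs_inv_fact_le_1 n : Rabs (/ INR (Factorial.fact n)) <= 1.
Proof.
  assert (1 <= INR (Factorial.fact n)) by (apply (le_INR 1), Factorial.lt_O_fact).
  rewrite Rabs_pos_eq by (apply Rlt_le, Rinv_0_lt_compat; lra).
  rewrite <- Rinv_1. apply Rinv_le_contravar; lra.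
Qed.

Lemma Rseries_tail_le_pow (a : nat -> R) q l K :
  is_series (fun i => a i * q ^ i) l -> (forall i, Rabs (a i) <= 1) -> Rabs q <= 1/2 ->
  Rabs (l - sum_n (fun i => a i * q ^ i) K) <= 2 * Rabs q ^ S K.
Proof.
  intros Hs Ha Hq. pose proof (Rabs_pos q).
  replace (2 * Rabs q ^ S K) with (Rabs q ^ S K / (1 - 1/2)) by field.
  apply (is_series_tail_le _ _ K (Rabs q ^ S K) (1/2) Hs ltac:(lra)). intros k.
  change (norm ?x) with (Rabs x). rewrite Rabs_mult, <- RPow_abs, pow_add.
  assert (Rabs q ^ k <= (1/2) ^ k) by (apply pow_incr; lra).
  assert (0 <= Rabs q ^ k) by (apply pow_le; lra).
  assert (0 <= Rabs q ^ S K) by (apply pow_le; lra).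
  pose proof (Ha (S K + k)%nat). pose proof (Rabs_pos (a (S K + k)%nat)).
  assert (Rabs q ^ S K * Rabs q ^ k <= Rabs q ^ S K * (1/2) ^ k) by (apply Rmult_le_compat_l; auto).
  assert (0 <= Rabs q ^ S K * Rabs q ^ k) by (apply Rmult_le_pos; lra).
  assert (Rabs (a (S K + k)%nat) * (Rabs q ^ S K * Rabs q ^ k) <= 1 * (Rabs q ^ S K * Rabs q ^ k))
    by (apply Rmult_le_compat_r; lra).
  lra.
Qed.

Lemma exp_quadratic_approx x : Rabs x <= 1/2 -> Rabs (exp x - (1 + x + x * x / 2)) <= 2 * Rabs x ^ 3.
Proof.
  intros Hx. unfold exp. destruct (exist_exp x) as [l Hl]. simpl.
  apply is_series_Reals in Hl.
  pose proof (Rseries_tail_le_pow (fun i => / INR (Factorial.fact i)) x l 2 Hl Rabs_inv_fact_le_1 Hx) as H.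
  rewrite !sum_Sn, sum_O in H. change plus with Rplus in H. simpl in H.
  replace (1 + x + x * x / 2) with (/ 1 * 1 + / 1 * (x * 1) + / (1 + 1) * (x * (x * 1))) by field.
  exact H.
Qed.

Lemma Rabs_sqr_le_half y : Rabs y <= 1/2 -> Rabs (Rsqr y) <= 1/2.
Proof. intros Hy. unfold Rsqr. rewrite Rabs_mult. pose proof (Rabs_pos y). nra. Qed.

Lemma cos_quadratic_approx y : Rabs y <= 1/2 -> Rabs (cos y - (1 - y * y / 2)) <= 2 * Rabs y ^ 4.
Proof.
  intros Hy. unfold cos. destruct (exist_cos (Rsqr y)) as [l Hl]. unfold cos_in in Hl.
  apply is_series_Reals in Hl.
  assert (Hc : forall i, Rabs (cos_n i) <= 1).
  { intros i. unfold cos_n, Rdiv. rewrite Rabs_mult, pow_1_abs, Rmult_1_l. apply Rabs_inv_fact_le_1. }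
  pose proof (Rseries_tail_le_pow cos_n (Rsqr y) l 1 Hl Hc (Rabs_sqr_le_half y Hy)) as H.
  rewrite !sum_Sn, sum_O in H. change plus with Rplus in H. unfold cos_n in H. simpl in H.
  replace (1 - y * y / 2) with (1 / 1 * 1 + -1 * 1 / (1 + 1) * (y² * 1)) by (unfold Rsqr; field).
  replace (Rabs y ^ 4) with (Rabs y² ^ 2) by (unfold Rsqr; rewrite Rabs_mult; ring).
  exact H.
Qed.

Lemma sin_linear_approx y : Rabs y <= 1/2 -> Rabs (sin y - y) <= 2 * Rabs y ^ 3.
Proof.
  intros Hy. unfold sin. destruct (exist_sin (Rsqr y)) as [l Hl]. unfold sin_in in Hl.
  apply is_series_Reals in Hl.
  assert (Hc : forall i, Rabs (sin_n i) <= 1).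
  { intros i. unfold sin_n, Rdiv. rewrite Rabs_mult, pow_1_abs, Rmult_1_l. apply Rabs_inv_fact_le_1. }
  pose proof (Rseries_tail_le_pow sin_n (Rsqr y) l 0 Hl Hc (Rabs_sqr_le_half y Hy)) as H.
  rewrite sum_O in H. unfold sin_n in H. simpl in H.
  replace (1 / 1 * 1) with 1 in H by field. replace (Rabs y² * 1) with (Rabs y²) in H by ring.
  replace (y * l - y) with (y * (l - 1)) by ring. rewrite Rabs_mult.
  replace (Rabs y ^ 3) with (Rabs y * Rabs y²) by (unfold Rsqr; rewrite Rabs_mult; ring).
  pose proof (Rabs_pos y). nra.
Qed.

Open Scope C_scope.

Definition cis (th : R) : C := (cos th, sin th).

Lemma Rabs_Im_le_Cmod (w : C) : (Rabs (Im w) <= Cmod w)%R.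
Proof. pose proof (Cmod2_alt w). pose proof (Cmod_ge_0 w). apply Rabs_le. split; nra. Qed.

Lemma Cmod_le_Rabs_add (a b : R) : (Cmod (a, b) <= Rabs a + Rabs b)%R.
Proof.
  pose proof (Cmod2_alt (a, b)) as H. simpl in H. pose proof (Cmod_ge_0 (a, b)).
  pose proof (Rabs_pos a). pose proof (Rabs_pos b).
  assert (Rabs a * Rabs a = a * a)%R by (rewrite <- Rabs_mult; apply Rabs_pos_eq; nra).
  assert (Rabs b * Rabs b = b * b)%R by (rewrite <- Rabs_mult; apply Rabs_pos_eq; nra).
  nra.
Qed.

Lemma Cexp_Re_Im (w : C) : Cexp w = RtoC (exp (Re w)) * cis (Im w).
Proof. unfold Cexp, cis, RtoC, Cmult. simpl. f_equal; ring. Qed.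

Lemma Cexp_0 : Cexp 0 = 1.
Proof. unfold Cexp. simpl. rewrite exp_0, cos_0, sin_0. unfold RtoC. f_equal; ring. Qed.

Lemma agree_at0_exp_Re :
  agree_at0 3 (fun w => RtoC (exp (Re w))) (fun w => 1 + Re w + Re w * Re w / 2).
Proof.
  exists 2%R. split; [lra|]. exists (1/2)%R. split; [lra|]. intros z _ Hz.
  pose proof (re_le_Cmod z).
  replace (RtoC (exp (Re z)) - (1 + RtoC (Re z) + RtoC (Re z) * RtoC (Re z) / 2)) with
    (RtoC (exp (Re z) - (1 + Re z + Re z * Re z / 2)))
    by (unfold RtoC, Cminus, Cplus, Cmult, Copp, Cdiv, Cinv; simpl; f_equal; field).
  rewrite Cmod_R. eapply Rle_trans; [apply exp_quadratic_approx; lra|].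
  apply Rmult_le_compat_l; [lra|]. apply pow_incr. split; [apply Rabs_pos|lra].
Qed.

Lemma agree_at0_cis_Im :
  agree_at0 3 (fun w => cis (Im w)) (fun w => 1 + Ci * Im w - Im w * Im w / 2).
Proof.
  exists 4%R. split; [lra|]. exists (1/2)%R. split; [lra|]. intros z _ Hz.
  pose proof (Rabs_Im_le_Cmod z). set (y := Im z) in *.
  replace (cis y - (1 + Ci * RtoC y - RtoC y * RtoC y / 2)) with
    ((cos y - (1 - y * y / 2), sin y - y)%R : C)
    by (unfold cis, Ci, RtoC, Cminus, Cplus, Cmult, Copp, Cdiv, Cinv; simpl; f_equal; field).
  eapply Rle_trans; [apply Cmod_le_Rabs_add|].
  pose proof (cos_quadratic_approx y ltac:(lra)). pose proof (sin_linear_approx y ltac:(lra)).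
  pose proof (Rabs_pos y).
  assert (Rabs y ^ 3 <= Cmod z ^ 3)%R by (apply pow_incr; lra).
  assert (Rabs y ^ 4 <= Rabs y ^ 3)%R.
  { change (Rabs y ^ 4)%R with (Rabs y * Rabs y ^ 3)%R.
    assert (0 <= Rabs y ^ 3)%R by (apply pow_le; lra). nra. }
  lra.
Qed.

Lemma bounded_at0_Re : bounded_at0 (fun w => RtoC (Re w)).
Proof. exists 1%R, 1%R. split; [lra|]. intros z _ Hz. rewrite Cmod_R. pose proof (re_le_Cmod z). lra. Qed.

Lemma bounded_at0_Im : bounded_at0 (fun w => RtoC (Im w)).
Proof. exists 1%R, 1%R. split; [lra|]. intros z _ Hz. rewrite Cmod_R. pose proof (Rabs_Im_le_Cmod z). lra. Qed.

Lemma Rabs_mult3_le (a b c m : R) :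
  (Rabs a <= m -> Rabs b <= m -> Rabs c <= m -> Rabs (a * b * c) <= m * m * m)%R.
Proof.
  intros Ha Hb Hc. rewrite !Rabs_mult. pose proof (Rabs_pos a). pose proof (Rabs_pos b).
  pose proof (Rabs_pos c).
  apply Rmult_le_compat; try apply Rmult_le_pos; auto. apply Rmult_le_compat; auto.
Qed.

Lemma agree_at0_exp_cis_truncations :
  agree_at0 3 (fun w => (1 + Re w + Re w * Re w / 2) * (1 + Ci * Im w - Im w * Im w / 2))
    (quad 1 1 (/2)).
Proof.
  exists 2%R. split; [lra|]. exists 1%R. split; [lra|]. intros z _ Hz.
  pose proof (Cmod_ge_0 z). pose proof (re_le_Cmod z). pose proof (Rabs_Im_le_Cmod z).
  set (m := Cmod z) in *. set (x := Re z) in *. set (y := Im z) in *.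
  assert (Ez : z = RtoC x + Ci * RtoC y)
    by (destruct z; unfold x, y, RtoC, Ci, Cplus, Cmult; simpl; f_equal; ring).
  unfold quad. rewrite Ez.
  replace ((1 + RtoC x + RtoC x * RtoC x / 2) * (1 + Ci * RtoC y - RtoC y * RtoC y / 2) -
    (1 + 1 * (RtoC x + Ci * RtoC y) + / 2 * (RtoC x + Ci * RtoC y) * (RtoC x + Ci * RtoC y)))
    with ((- (x * y * y) / 2 - x * y * (x * y) / 4, x * x * y / 2)%R : C)
    by (unfold Ci, RtoC, Cminus, Cplus, Cmult, Copp, Cdiv, Cinv; simpl; f_equal; field).
  eapply Rle_trans; [apply Cmod_le_Rabs_add|].
  pose proof (Rabs_mult3_le x y y m ltac:(lra) ltac:(lra) ltac:(lra)).
  pose proof (Rabs_mult3_le x x y m ltac:(lra) ltac:(lra) ltac:(lra)).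
  assert (Rabs (x * y) <= m * m)%R
    by (rewrite Rabs_mult; apply Rmult_le_compat; try apply Rabs_pos; lra).
  assert (Rabs (x * y * (x * y)) <= m * m * m)%R.
  { rewrite Rabs_mult. pose proof (Rabs_pos (x * y)).
    apply Rle_trans with (m * m * (m * m))%R; [apply Rmult_le_compat; auto|].
    assert (0 <= m * m * m)%R by (repeat apply Rmult_le_pos; lra). nra. }
  unfold Rminus, Rdiv. eapply Rle_trans; [apply Rplus_le_compat_r, Rabs_triang|].
  rewrite !Rabs_mult, !Rabs_Ropp, !Rabs_mult, ?(Rabs_pos_eq (/2)), ?(Rabs_pos_eq (/4)) by lra.
  rewrite <- !Rabs_mult. simpl. replace (m * (m * (m * 1)))%R with (m * m * m)%R by ring.
  assert (0 <= m * m * m)%R by (repeat apply Rmult_le_pos; lra). lra.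
Qed.

Lemma Cexp_expansion2 : expansion2 Cexp 1 1 (/2).
Proof.
  assert (HP : bounded_at0 (fun w => 1 + Re w + Re w * Re w / 2)).
  { repeat first [apply bounded_at0_Re | bounded_at0_poly]. }
  eapply agree_at0_trans; [|apply agree_at0_exp_cis_truncations].
  apply (agree_at0_eq_l _ (fun w => RtoC (exp (Re w)) * cis (Im w))).
  { intros w. symmetry. apply Cexp_Re_Im. }
  apply agree_at0_mul; [apply agree_at0_exp_Re|apply agree_at0_cis_Im| |].
  - exact (bounded_at0_agree _ _ _ agree_at0_exp_Re HP).
  - repeat first [apply bounded_at0_Im | bounded_at0_poly].
Qed.

Lemma Hcheb_denom_ge (t : R) (w : C) : (0 < t < 1)%R -> (Cmod w < /8)%R ->
  (/2 <= Cmod (1 - 2 * RtoC t * w + w * w))%R.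
Proof.
  intros Ht Hw. pose proof (Cmod_ge_0 w) as Hw0.
  pose proof (Cmod_triangle (1 - 2 * RtoC t * w + w * w) (2 * RtoC t * w - w * w)) as H.
  replace (1 - 2 * RtoC t * w + w * w + (2 * RtoC t * w - w * w)) with (RtoC 1) in H by ring.
  assert (H' : (Cmod (2 * RtoC t * w - w * w) <= 2 * t * Cmod w + Cmod w * Cmod w)%R).
  { unfold Cminus. eapply Rle_trans; [apply Cmod_triangle|].
    rewrite Cmod_opp, !Cmod_mult, !Cmod_R, !Rabs_pos_eq by lra. lra. }
  rewrite Cmod_1 in H. nra.
Qed.

Lemma Hcheb_0 (t : R) : Hcheb t 0 = 1.
Proof.
  unfold Hcheb. replace (1 - 2 * RtoC t * 0 + 0 * 0) with (RtoC 1) by ring.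
  unfold RtoC, Cinv. simpl. f_equal; field.
Qed.

Lemma Hcheb_expansion2 (t : R) : (0 < t < 1)%R ->
  expansion2 (Hcheb t) 1 (2 * RtoC t) (4 * RtoC t * RtoC t - 1).
Proof.
  intros Ht. set (den := fun w => 1 - 2 * RtoC t * w + w * w).
  assert (Hden : near0 (fun w => /2 <= Cmod (den w))%R).
  { exists (/8)%R. split; [lra|]. intros z _ Hz. apply Hcheb_denom_ge; auto. }
  assert (Hden0 : near0 (fun w => den w <> 0)).
  { revert Hden. apply filter_imp. intros z Hz E. rewrite E, Cmod_0 in Hz. lra. }
  apply (agree_at0_of_factor _ _ _ (fun w =>
    - (4 * RtoC t - 8 * RtoC t * RtoC t * RtoC t + (4 * RtoC t * RtoC t - 1) * w) / den w)).
  - revert Hden0. apply filter_imp. intros z Hz. unfold Hcheb, quad, den in *. field. exact Hz.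
  - unfold Cdiv. apply bounded_at0_mul; [bounded_at0_poly|].
    exists 2%R. generalize (filter_and _ _ Hden Hden0). apply filter_imp. intros z [Hz Hz0].
    rewrite Cmod_inv by exact Hz0.
    apply Rle_trans with (/ / 2)%R; [apply Rinv_le_contravar; lra|right; field].
Qed.

(** * Coefficients of Schwarz functions *)

Lemma cis_add a b : cis a * cis b = cis (a + b).
Proof. unfold cis, Cmult. simpl. rewrite cos_plus, sin_plus. f_equal; ring. Qed.

Lemma cis_pow th k : cis th ^ k = cis (INR k * th).
Proof.
  induction k as [|k IH].
  - simpl. rewrite Rmult_0_l. unfold cis. rewrite cos_0, sin_0. reflexivity.
  - simpl Cpow. rewrite IH, cis_add. f_equal. rewrite S_INR. ring.
Qed.

Lemma Cmod_cis th : Cmod (cis th) = 1%R.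
Proof.
  unfold Cmod, cis. simpl. pose proof (sin2_cos2 th). unfold Rsqr in H.
  replace (cos th * (cos th * 1) + sin th * (sin th * 1))%R with 1%R by lra. apply sqrt_1.
Qed.

Lemma cis_mul_conj th : cis th * Cconj (cis th) = 1.
Proof.
  unfold Cconj, cis, Cmult. simpl. pose proof (sin2_cos2 th). unfold Rsqr in H.
  unfold RtoC. f_equal; lra.
Qed.

Lemma cis_neq1 th : (0 < th < 2 * PI)%R -> cis th <> 1.
Proof.
  intros Hth E. unfold cis in E. injection E as E1 E2.
  destruct (Rtotal_order th PI) as [H|[H|H]].
  - pose proof (sin_gt_0 th ltac:(lra) H). lra.
  - subst th. rewrite cos_PI in E1. lra.
  - pose proof (sin_lt_0 th H ltac:(lra)). lra.
Qed.

Definition root_unity (N : nat) : C := cis (2 * PI / INR N).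

Lemma Cmod_root_unity N : Cmod (root_unity N) = 1%R.
Proof. apply Cmod_cis. Qed.

Lemma root_unity_mul_conj N : root_unity N * Cconj (root_unity N) = 1.
Proof. apply cis_mul_conj. Qed.

Lemma root_unity_pow_N N : (0 < N)%nat -> root_unity N ^ N = 1.
Proof.
  intros HN. assert (0 < INR N)%R by (apply lt_0_INR; lia).
  unfold root_unity. rewrite cis_pow.
  replace (INR N * (2 * PI / INR N))%R with (2 * PI)%R by (field; lra).
  unfold cis. rewrite cos_2PI, sin_2PI. reflexivity.
Qed.

Lemma root_unity_pow_neq1 N j : (0 < j < N)%nat -> root_unity N ^ j <> 1.
Proof.
  intros Hj. unfold root_unity. rewrite cis_pow. apply cis_neq1.
  assert (0 < INR j)%R by (apply lt_0_INR; lia). assert (INR j < INR N)%R by (apply lt_INR; lia).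
  pose proof PI_RGT_0.
  replace (INR j * (2 * PI / INR N))%R with (2 * PI * (INR j / INR N))%R by (field; lra).
  assert (0 < INR j / INR N < 1)%R.
  { split; [apply Rdiv_lt_0_compat; lra|].
    apply (Rmult_lt_reg_r (INR N)); [lra|]. unfold Rdiv. rewrite Rmult_assoc, Rinv_l; lra. }
  nra.
Qed.

Lemma geom_sum_mul (u : C) K : (u - 1) * sum_n (fun k => u ^ k) K = u ^ S K - 1.
Proof.
  induction K as [|K IH].
  - rewrite sum_O. simpl. ring_C.
  - rewrite sum_Sn. change (plus ?a ?b) with (Cplus a b).
    rewrite Cmult_plus_distr_l, IH. simpl. ring_C.
Qed.

Lemma geom_sum_root_eq0 (u : C) K : u ^ S K = 1 -> u <> 1 -> sum_n (fun k => u ^ k) K = (0 : C).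
Proof.
  intros HuN Hu1. assert (Hu0 : u - 1 <> 0) by (intros E; apply Hu1, Ceq_minus, E).
  pose proof (geom_sum_mul u K) as Hg. rewrite HuN in Hg.
  replace (sum_n (fun k => u ^ k) K) with (/ (u - 1) * ((u - 1) * sum_n (fun k => u ^ k) K))
    by (field; exact Hu0).
  rewrite Hg. ring_C.
Qed.

Lemma sum_n_C_const (x : C) K : sum_n (fun _ => x) K = INR (S K) * x.
Proof.
  induction K as [|K IH].
  - rewrite sum_O. simpl. ring_C.
  - rewrite sum_Sn, IH. change (plus ?a ?b) with (Cplus a b).
    rewrite (S_INR (S K)), RtoC_plus. ring_C.
Qed.

Lemma sum_n_single (T : nat -> C) n K : (n <= K)%nat ->
  (forall m, (m <= K)%nat -> m <> n -> T m = 0) -> sum_n T K = T n.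
Proof.
  intros Hn H. induction K as [|K IH].
  - rewrite sum_O. f_equal. lia.
  - rewrite sum_Sn. change (plus ?a ?b) with (Cplus a b).
    destruct (Nat.eq_dec n (S K)) as [->|Hne].
    + rewrite (sum_n_ext_loc T (fun _ => (0 : C)) K) by (intros m Hm; apply H; lia).
      rewrite sum_n_C_const. ring_C.
    + rewrite IH by (lia || (intros; apply H; lia)). rewrite (H (S K)) by lia. ring_C.
Qed.

Lemma is_series_sum_n (F : nat -> nat -> C) (L : nat -> C) K :
  (forall k, is_series (F k) (L k)) -> is_series (fun m => sum_n (fun k => F k m) K) (sum_n L K).
Proof.
  intros H. induction K as [|K IH].
  - rewrite sum_O. eapply is_series_ext; [|apply (H 0%nat)]. intros. rewrite sum_O. reflexivity.
  - rewrite sum_Sn. eapply is_series_ext; [|apply (is_series_plus _ _ _ _ IH (H (S K)))].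
    intros m. rewrite sum_Sn. reflexivity.
Qed.

Definition root_filter (K n m : nat) : C :=
  sum_n (fun k => (root_unity (S K) ^ m * Cconj (root_unity (S K)) ^ n) ^ k) K.

Lemma root_filter_diag K n : root_filter K n n = INR (S K).
Proof.
  unfold root_filter. rewrite <- Cpow_mult_l, root_unity_mul_conj, Cpow_1_l.
  rewrite (sum_n_ext _ (fun _ => (1 : C))) by (intros; apply Cpow_1_l).
  rewrite sum_n_C_const. ring_C.
Qed.

Lemma Cmod_root_filter_le K n m : (Cmod (root_filter K n m) <= INR (S K))%R.
Proof.
  unfold root_filter.
  pose proof (@norm_sum_n_le C_AbsRing C_NormedModule
    (fun k => (root_unity (S K) ^ m * Cconj (root_unity (S K)) ^ n) ^ k) (fun _ => 1%R) K) as H.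
  rewrite sum_n_const, Rmult_1_r in H. apply H. intros k. change (norm ?x) with (Cmod x).
  rewrite !Cmod_pow, Cmod_mult, !Cmod_pow, Cmod_conj, Cmod_root_unity, !pow1, Rmult_1_l, pow1. lra.
Qed.

Lemma root_filter_offdiag K n m : (n <= K)%nat -> (m <= K)%nat -> m <> n ->
  root_filter K n m = 0.
Proof.
  intros Hn Hm Hmn. unfold root_filter. set (zeta := root_unity (S K)).
  assert (Hzc : zeta * Cconj zeta = 1) by apply root_unity_mul_conj.
  assert (HzN : zeta ^ S K = 1) by (apply root_unity_pow_N; lia).
  apply geom_sum_root_eq0.
  - rewrite Cpow_mult_l, <- !Cpow_mult_r, (Nat.mul_comm m), (Nat.mul_comm n), !Cpow_mult_r.
    rewrite <- Cpow_conj, HzN. replace (Cconj 1) with (RtoC 1) by (unfold Cconj, RtoC; simpl; f_equal; ring).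
    rewrite !Cpow_1_l. ring.
  - destruct (Compare_dec.lt_dec n m) as [Hlt|Hge].
    + replace (zeta ^ m * Cconj zeta ^ n) with (zeta ^ (m - n)).
      * apply root_unity_pow_neq1. lia.
      * replace m with (m - n + n)%nat at 2 by lia.
        rewrite Cpow_add_r, <- Cmult_assoc, <- Cpow_mult_l, Hzc, Cpow_1_l. ring.
    + replace (zeta ^ m * Cconj zeta ^ n) with (Cconj (zeta ^ (n - m))).
      * intros E. apply (root_unity_pow_neq1 (S K) (n - m)); [lia|].
        fold zeta. rewrite <- (Cconj_conj (zeta ^ (n - m))), E.
        unfold Cconj, RtoC. simpl. f_equal. ring.
      * rewrite Cpow_conj. replace n with (n - m + m)%nat at 2 by lia.
        rewrite Cpow_add_r, Cmult_comm, <- Cmult_assoc, (Cmult_comm (Cconj zeta ^ m)),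
          <- Cpow_mult_l, Hzc, Cpow_1_l. ring.
Qed.

Lemma root_average_is_series (om : C -> C) c (r : R) K n :
  taylor_on_U om c -> (0 <= r < 1)%R ->
  is_series (fun m => c m * RtoC r ^ m * root_filter K n m)
    (sum_n (fun k => (Cconj (root_unity (S K)) ^ n) ^ k * om (r * root_unity (S K) ^ k)) K).
Proof.
  intros Ht Hr. set (zeta := root_unity (S K)). set (kap := Cconj zeta ^ n).
  assert (Hz1 : Cmod zeta = 1%R) by apply Cmod_root_unity.
  eapply is_series_ext; [|apply (is_series_sum_n (fun k m => kap ^ k * (c m * (r * zeta ^ k) ^ m)))].
  - intros m. unfold root_filter. fold zeta kap.
    transitivity (sum_n (fun k => mult (c m * RtoC r ^ m) ((zeta ^ m * kap) ^ k)) K).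
    + apply sum_n_ext. intros k. change (mult ?a ?b) with (a * b).
      rewrite !Cpow_mult_l, <- !Cpow_mult_r, Nat.mul_comm. ring_C.
    + rewrite sum_n_mult_l. reflexivity.
  - intros k. apply (@is_series_scal C_AbsRing C_NormedModule), Ht. unfold inU.
    rewrite Cmod_mult, Cmod_pow, Hz1, pow1, Cmod_R, Rabs_pos_eq; lra.
Qed.

(* Averaging [om] over the points [r * zeta ^ k] isolates the coefficient [c n]
   up to the contribution of the indices beyond [K]. *)
Lemma schwarz_coef_le_tail (om : C -> C) c n K (r M q : R) :
  taylor_on_U om c -> (forall z, inU z -> (Cmod (om z) < 1)%R) -> (0 < r < 1)%R ->
  (n <= K)%nat -> (0 <= M)%R -> (0 <= q < 1)%R ->
  (forall m, (Cmod (c m) * r ^ m <= M * q ^ m)%R) ->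
  (Cmod (c n) * r ^ n <= 1 + M * q ^ S K / (1 - q))%R.
Proof.
  intros Ht Hom Hr HnK HM Hq Hcb.
  set (N := INR (S K)). assert (HN : (0 < N)%R) by (apply lt_0_INR; lia).
  set (T := fun m => c m * RtoC r ^ m * root_filter K n m).
  set (avg := sum_n (fun k => (Cconj (root_unity (S K)) ^ n) ^ k * om (r * root_unity (S K) ^ k)) K).
  assert (HT : is_series T avg) by (apply root_average_is_series; auto; lra).
  assert (Havg : (Cmod avg <= N)%R).
  { pose proof (@norm_sum_n_le C_AbsRing C_NormedModule
      (fun k => (Cconj (root_unity (S K)) ^ n) ^ k * om (r * root_unity (S K) ^ k)) (fun _ => 1%R) K) as H.
    rewrite sum_n_const, Rmult_1_r in H. apply H. intros k. change (norm ?x) with (Cmod x).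
    rewrite Cmod_mult, !Cmod_pow, Cmod_conj, Cmod_root_unity, !pow1, Rmult_1_l.
    apply Rlt_le, Hom. unfold inU.
    rewrite Cmod_mult, Cmod_pow, Cmod_root_unity, pow1, Cmod_R, Rabs_pos_eq; lra. }
  assert (Hsum : sum_n T K = T n).
  { apply sum_n_single; auto. intros m Hm Hmn. unfold T. rewrite root_filter_offdiag by auto. ring. }
  assert (Htail : (Cmod (avg - T n) <= N * M * q ^ S K / (1 - q))%R).
  { rewrite <- Hsum. apply (is_series_tail_le T avg K (N * M * q ^ S K) q HT Hq).
    intros k. change (norm ?x) with (Cmod x). unfold T.
    rewrite !Cmod_mult, Cmod_pow, Cmod_R, Rabs_pos_eq by lra.
    pose proof (Cmod_root_filter_le K n (S K + k)) as Hf.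
    assert (Hc0 : (0 <= Cmod (c (S K + k)%nat) * r ^ (S K + k))%R)
      by (apply Rmult_le_pos; [apply Cmod_ge_0|apply pow_le; lra]).
    eapply Rle_trans; [exact (Rmult_le_compat _ _ _ _ Hc0 (Cmod_ge_0 _) (Hcb (S K + k)%nat) Hf)|].
    rewrite pow_add. right. fold N. ring. }
  assert (HTn : Cmod (T n) = (Cmod (c n) * r ^ n * N)%R).
  { unfold T. rewrite root_filter_diag, !Cmod_mult, Cmod_pow, !Cmod_R.
    fold N. rewrite !Rabs_pos_eq; lra. }
  pose proof (Cmod_triangle avg (- (avg - T n))) as Htri.
  replace (avg + - (avg - T n)) with (T n) in Htri by ring. rewrite Cmod_opp, HTn in Htri.
  apply (Rmult_le_reg_r N); auto. unfold Rdiv in *. nra.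
Qed.

Lemma schwarz_coef_scaled_le_1 (om : C -> C) c n (r : R) :
  taylor_on_U om c -> (forall z, inU z -> (Cmod (om z) < 1)%R) -> (0 < r < 1)%R ->
  (Cmod (c n) * r ^ n <= 1)%R.
Proof.
  intros Ht Hom Hr. set (rho := ((1 + r) / 2)%R).
  destruct (taylor_coef_bound om c rho Ht ltac:(unfold rho; lra)) as [M [HM HMb]].
  set (q := (r / rho)%R).
  assert (Hq : (0 <= q < 1)%R).
  { unfold q, rho. split; [apply Rmult_le_pos; [lra|apply Rlt_le, Rinv_0_lt_compat; lra]|].
    apply (Rmult_lt_reg_r ((1 + r) / 2)); [lra|]. unfold Rdiv. field_simplify; lra. }
  assert (Hcb : forall m, (Cmod (c m) * r ^ m <= M * q ^ m)%R).
  { intros m. replace (r ^ m)%R with (rho ^ m * q ^ m)%R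
      by (rewrite <- Rpow_mult_distr; f_equal; unfold q, rho; field; lra).
    rewrite <- Rmult_assoc. apply Rmult_le_compat_r; [apply pow_le; lra|apply HMb]. }
  cut (Cmod (c n) * r ^ n - 1 <= 0)%R; [lra|].
  apply (Rle_0_of_le_linear _ (M / (1 - q)) 1 Rlt_0_1). intros e He.
  destruct (pow_lt_1_zero q ltac:(rewrite Rabs_pos_eq; lra) e ltac:(lra)) as [N0 HN0].
  pose proof (schwarz_coef_le_tail om c n (Nat.max n N0) r M q Ht Hom Hr
    ltac:(lia) HM Hq Hcb) as H.
  specialize (HN0 (S (Nat.max n N0)) ltac:(lia)). rewrite Rabs_pos_eq in HN0 by (apply pow_le; lra).
  assert (0 <= M / (1 - q))%R by (apply Rmult_le_pos; [lra|apply Rlt_le, Rinv_0_lt_compat; lra]).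
  replace (M * q ^ S (Nat.max n N0) / (1 - q))%R with (M / (1 - q) * q ^ S (Nat.max n N0))%R in H
    by (field; lra).
  nra.
Qed.

Lemma bernoulli_ineq (r : R) n : (0 <= r)%R -> (1 - INR n * (1 - r) <= r ^ n)%R.
Proof.
  intros Hr. induction n as [|n IH]; [simpl; lra|].
  rewrite S_INR. simpl pow. pose proof (pos_INR n).
  assert (r * (1 - INR n * (1 - r)) <= r * r ^ n)%R by (apply Rmult_le_compat_l; auto).
  assert (0 <= INR n * ((1 - r) * (1 - r)))%R by (apply Rmult_le_pos; [lra|apply Rle_0_sqr]).
  nra.
Qed.

Lemma schwarz_coef_le_1 (om : C -> C) c n :
  taylor_on_U om c -> (forall z, inU z -> (Cmod (om z) < 1)%R) -> (Cmod (c n) <= 1)%R.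
Proof.
  intros Ht Hom. cut (Cmod (c n) - 1 <= 0)%R; [lra|].
  apply (Rle_0_of_le_linear _ (Cmod (c n) * INR n) 1 Rlt_0_1). intros x Hx.
  pose proof (schwarz_coef_scaled_le_1 om c n (1 - x) Ht Hom ltac:(lra)) as Hscaled.
  pose proof (bernoulli_ineq (1 - x) n ltac:(lra)) as Hbern.
  replace (1 - (1 - x))%R with x in Hbern by ring.
  assert (Cmod (c n) * (1 - INR n * x) <= Cmod (c n) * (1 - x) ^ n)%R
    by (apply Rmult_le_compat_l; [apply Cmod_ge_0|auto]).
  nra.
Qed.

(** * Coefficient relations *)

Lemma taylor_expansions h h1 h2 a : taylor_on_U h a ->
  (forall z, inU z -> Cderiv_at h z (h1 z) /\ Cderiv_at h1 z (h2 z)) ->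
  expansion3 h (a 0%nat) (a 1%nat) (a 2%nat) (a 3%nat) /\
  expansion2 h1 (a 1%nat) (2 * a 2%nat) (3 * a 3%nat) /\
  expansion2 h2 (2 * a 2%nat) (6 * a 3%nat) (12 * a 4%nat).
Proof.
  intros Ht Hder. destruct (taylor_coef_growth h a Ht) as [M [HcB HsO]].
  assert (Hd1 : series_on h1 (derived_coef a) (/32)).
  { apply (series_on_derive h h1 a M 2); try lra; [exact HcB|apply (series_on_le _ _ (/16)); auto; lra|].
    intros z Hz. apply (Hder z ltac:(unfold inU; lra)). }
  pose proof (derived_coef_growth a M 2 HcB) as HcB1.
  assert (Hd2 : series_on h2 (derived_coef (derived_coef a)) (/64)).
  { apply (series_on_derive h1 h2 (derived_coef a) (M * 2) (2 * 2)); try lra; auto.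
    - apply (series_on_le _ _ (/32)); auto; lra.
    - intros z Hz. apply (Hder z ltac:(unfold inU; lra)). }
  pose proof (derived_coef_growth _ _ _ HcB1) as HcB2.
  split; [|split].
  - exact (series_expansion3 h a M 2 (/16) HcB ltac:(lra) ltac:(lra) HsO).
  - pose proof (series_expansion2 h1 _ _ _ (/32) HcB1 ltac:(lra) ltac:(lra) Hd1) as H.
    eapply agree_at0_eq_r; [exact H|]. intros z. unfold quad, derived_coef.
    rewrite !S_INR, !RtoC_plus. simpl. ring.
  - pose proof (series_expansion2 h2 _ _ _ (/64) HcB2 ltac:(lra) ltac:(lra) Hd2) as H.
    eapply agree_at0_eq_r; [exact H|]. intros z. unfold quad, derived_coef.
    rewrite !S_INR, !RtoC_plus. simpl. ring.
Qed.

Lemma log_ratio_expansion (h L : C -> C) a2 a3 :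
  expansion3 h 0 1 a2 a3 -> analytic_U L -> L 0 = 0 ->
  (forall z, inU z -> z <> 0 -> Cexp (L z) = h z / z) ->
  expansion2 L 0 a2 (a3 - a2 * a2 / 2).
Proof.
  intros Hh [l Hl] HL0 HLe.
  destruct (taylor_coef_growth L l Hl) as [M [HlB HlS]].
  pose proof (series_expansion2 L l M 2 (/16) HlB ltac:(lra) ltac:(lra) HlS) as QL.
  rewrite <- (series_at0 L l M 2 (/16) HlB ltac:(lra) ltac:(lra) HlS), HL0 in QL.
  pose proof (expansion2_comp Cexp L _ _ _ _ _ Cexp_expansion2 Cexp_0 QL) as QE.
  assert (QE' : expansion2 (fun z => h z / z) 1 (1 * l 1%nat) (1 * l 2%nat + / 2 * l 1%nat * l 1%nat)).
  { apply (agree_at0_trans _ _ (fun z => Cexp (L z))); [|exact QE].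
    apply agree_at0_of_near_eq. exists 1%R. split; [lra|].
    intros z Hz Hz1. symmetry. apply HLe; auto. }
  destruct (expansion2_unique _ _ _ _ _ _ _ (expansion3_div_z _ _ _ _ Hh) QE') as [_ [E1 E2]].
  replace a2 with (l 1%nat) by (rewrite E1; ring).
  replace (a3 - l 1%nat * l 1%nat / 2) with (l 2%nat) by (rewrite E2; field).
  exact QL.
Qed.

Lemma subord_operator_expansion (lam mu del : R) (L h1 h2 : C -> C) a2 a3 a4 :
  expansion2 L 0 a2 (a3 - a2 * a2 / 2) ->
  expansion2 h1 1 (2 * a2) (3 * a3) ->
  expansion2 h2 (2 * a2) (6 * a3) (12 * a4) ->
  expansion2 (fun z => (1 - RtoC lam) * Cexp (RtoC mu * L z)
                       + RtoC lam * h1 z * Cexp ((RtoC mu - 1) * L z)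
                       + RtoC (xi lam mu) * RtoC del * z * h2 z)
    1 ((RtoC lam + RtoC mu + 2 * RtoC (xi lam mu) * RtoC del) * a2)
    ((2 * RtoC lam + RtoC mu + 6 * RtoC (xi lam mu) * RtoC del) * a3
       + (RtoC mu - 1) * (RtoC mu + 2 * RtoC lam) / 2 * a2 * a2).
Proof.
  intros QL QH1 QH2.
  assert (QL' : forall s, expansion2 (fun z => s * L z) 0 (s * a2) (s * (a3 - a2 * a2 / 2))).
  { intros s. rewrite <- (Cmult_0_r s). apply expansion2_scal, QL. }
  pose proof (expansion2_comp Cexp _ _ _ _ _ _ Cexp_expansion2 Cexp_0 (QL' (RtoC mu))) as QE1.
  pose proof (expansion2_comp Cexp _ _ _ _ _ _ Cexp_expansion2 Cexp_0 (QL' (RtoC mu - 1))) as QE2.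
  pose proof (expansion2_add _ _ _ _ _ _ _ _
    (expansion2_add _ _ _ _ _ _ _ _
      (expansion2_scal (1 - RtoC lam) _ _ _ _ QE1)
      (expansion2_mul _ _ _ _ _ _ _ _ (expansion2_scal (RtoC lam) _ _ _ _ QH1) QE2))
    (expansion2_mul _ _ _ _ _ _ _ _
      (expansion2_scal (RtoC (xi lam mu) * RtoC del) _ _ _ _ expansion2_id) QH2)) as H.
  eapply agree_at0_eq_r; [exact H|]. intros z. unfold quad. field.
Qed.

Lemma Hcheb_subordinate_coefs (t : R) (Phi : C -> C) p0 p1 p2 :
  (0 < t < 1)%R -> subordinate Phi (Hcheb t) -> expansion2 Phi p0 p1 p2 ->
  exists w1 w2, (Cmod w1 <= 1)%R /\ (Cmod w2 <= 1)%R /\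
    p1 = 2 * RtoC t * w1 /\ p2 = 2 * RtoC t * w2 + (4 * RtoC t * RtoC t - 1) * w1 * w1.
Proof.
  intros Ht [om [[w Hw] [Hom0 [HomU Heq]]]] HPhi.
  destruct (taylor_coef_growth om w Hw) as [M [HwB HwS]].
  pose proof (series_expansion2 om w M 2 (/16) HwB ltac:(lra) ltac:(lra) HwS) as QW.
  rewrite <- (series_at0 om w M 2 (/16) HwB ltac:(lra) ltac:(lra) HwS), Hom0 in QW.
  pose proof (expansion2_comp (Hcheb t) om _ _ _ _ _ (Hcheb_expansion2 t Ht) (Hcheb_0 t) QW) as QC.
  assert (QC' : expansion2 Phi 1 (2 * RtoC t * w 1%nat)
                  (2 * RtoC t * w 2%nat + (4 * RtoC t * RtoC t - 1) * w 1%nat * w 1%nat)).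
  { apply (agree_at0_trans _ _ (fun z => Hcheb t (om z))); [|exact QC].
    apply agree_at0_of_near_eq. exists 1%R. split; [lra|]. intros z _ Hz. apply Heq, Hz. }
  destruct (expansion2_unique _ _ _ _ _ _ _ HPhi QC') as [_ [E1 E2]].
  assert (Hbound : forall n, (Cmod (w n) <= 1)%R).
  { intros n. apply (schwarz_coef_le_1 om w n Hw). intros z Hz. apply HomU, Hz. }
  exists (w 1%nat), (w 2%nat). repeat split; auto.
Qed.

Lemma op_subord_coefs (lam mu del t : R) (h : C -> C) (a : nat -> C) :
  (1/2 < t < 1)%R -> taylor_on_U h a -> a 0%nat = 0 -> a 1%nat = 1 -> op_subord lam mu del t h ->
  exists c1 c2 : C, (Cmod c1 <= 1)%R /\ (Cmod c2 <= 1)%R /\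
   RtoC (lam + mu + 2 * xi lam mu * del) * a 2%nat = 2 * RtoC t * c1 /\
   RtoC (2 * lam + mu + 6 * xi lam mu * del) * a 3%nat
     + RtoC ((mu - 1) * (mu + 2 * lam) / 2) * a 2%nat * a 2%nat
     = 2 * RtoC t * c2 + (4 * RtoC t * RtoC t - 1) * c1 * c1.
Proof.
  intros Ht Hh Ha0 Ha1 [L [h1 [h2 [HL [HL0 [HLe [Hder Hsub]]]]]]].
  destruct (taylor_expansions h h1 h2 a Hh Hder) as [QH [QH1 QH2]].
  rewrite Ha0, Ha1 in QH. rewrite Ha1 in QH1.
  pose proof (log_ratio_expansion h L _ _ QH HL HL0 HLe) as QL.
  pose proof (subord_operator_expansion lam mu del L h1 h2 _ _ _ QL QH1 QH2) as QF.
  destruct (Hcheb_subordinate_coefs t _ _ _ _ ltac:(lra) Hsub QF) as [c1 [c2 [Hc1 [Hc2 [E1 E2]]]]].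
  exists c1, c2. rewrite RtoC_div, !RtoC_mult, !RtoC_plus, !RtoC_mult, RtoC_minus by lra. auto.
Qed.

Lemma inverse_coefs f a g b : in_A f a -> univalent_U f -> local_inverse f g -> taylor_on_U g b ->
  b 0%nat = 0 /\ b 1%nat = 1 /\ b 2%nat = - a 2%nat /\ b 3%nat = 2 * a 2%nat * a 2%nat - a 3%nat.
Proof.
  intros [Hf [Ha0 Ha1]] Hu [r [Hr Hinv]] Hg.
  destruct (taylor_coef_growth f a Hf) as [M [HaB HaS]].
  destruct (taylor_coef_growth g b Hg) as [Mg [HbB HbS]].
  assert (Hf0 : f 0 = 0) by (rewrite (series_at0 f a M 2 (/16) HaB ltac:(lra) ltac:(lra) HaS); auto).
  assert (Hg0 : g 0 = 0).
  { destruct (Hinv 0 ltac:(rewrite Cmod_0; lra)) as [H1 H2]. apply Hu; auto.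
    - unfold inU. rewrite Cmod_0. lra.
    - rewrite H2, Hf0. reflexivity. }
  assert (Hb0 : b 0%nat = 0) by (rewrite <- (series_at0 g b Mg 2 (/16) HbB ltac:(lra) ltac:(lra) HbS); auto).
  pose proof (series_expansion3 f a M 2 (/16) HaB ltac:(lra) ltac:(lra) HaS) as QF.
  pose proof (series_expansion3 g b Mg 2 (/16) HbB ltac:(lra) ltac:(lra) HbS) as QG.
  rewrite Ha0, Ha1 in QF. rewrite Hb0 in QG.
  pose proof (expansion3_comp f g _ _ _ _ _ _ _ QF Hf0 QG) as QC.
  assert (QC' : expansion3 (fun w => f (g w)) 0 1 0 0).
  { apply (agree_at0_trans _ _ (fun z => z)); [|exact expansion3_id].
    apply agree_at0_of_near_eq. exists r. split; auto. intros z _ Hz. apply Hinv, Hz. }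
  destruct (expansion3_unique _ _ _ _ _ _ _ _ _ QC QC') as [_ [E1 [E2 E3]]].
  assert (B1 : b 1%nat = 1) by (rewrite <- E1; ring).
  rewrite B1 in E2, E3.
  assert (B2 : b 2%nat = - a 2%nat) by (apply Ceq_minus; rewrite <- E2; ring).
  rewrite B2 in E3.
  repeat split; auto. apply Ceq_minus. rewrite <- E3. ring.
Qed.

(** * Solving for the coefficients *)

Lemma RtoC_neq0 (x : R) : x <> 0%R -> RtoC x <> 0.
Proof. intros H E. apply H. injection E as E. exact E. Qed.

Lemma bi_coef_system (A B K t : R) (a2 a3 c1 c2 d1 d2 : C) :
  t <> 0%R -> A <> 0%R -> B <> 0%R ->
  RtoC A * a2 = 2 * RtoC t * c1 ->
  RtoC B * a3 + RtoC K * a2 * a2 = 2 * RtoC t * c2 + (4 * RtoC t * RtoC t - 1) * c1 * c1 ->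
  RtoC A * (- a2) = 2 * RtoC t * d1 ->
  RtoC B * (2 * a2 * a2 - a3) + RtoC K * (- a2) * (- a2)
    = 2 * RtoC t * d2 + (4 * RtoC t * RtoC t - 1) * d1 * d1 ->
  a3 = a2 * a2 + RtoC t * (c2 - d2) / RtoC B /\
  a2 * a2 * RtoC (A ^ 2 - 2 * (2 * A ^ 2 - 2 * B - 2 * K) * t ^ 2) = 4 * RtoC t ^ 3 * (c2 + d2).
Proof.
  intros Ht HA HB E1 E2 E3 E4.
  apply RtoC_neq0 in Ht, HA, HB.
  assert (Ec1 : c1 = RtoC A * a2 / (2 * RtoC t)) by (rewrite E1; field; auto).
  assert (Ed1 : d1 = RtoC A * (- a2) / (2 * RtoC t)) by (rewrite E3; field; auto).
  assert (Ec2 : c2 = (RtoC B * a3 + RtoC K * a2 * a2 - (4 * RtoC t * RtoC t - 1) * c1 * c1) / (2 * RtoC t))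
    by (rewrite E2; field; auto).
  assert (Ed2 : d2 = (RtoC B * (2 * a2 * a2 - a3) + RtoC K * (- a2) * (- a2)
                      - (4 * RtoC t * RtoC t - 1) * d1 * d1) / (2 * RtoC t))
    by (rewrite E4; field; auto).
  split.
  - rewrite Ec2, Ed2, Ed1, Ec1. field. auto.
  - rewrite Ec2, Ed2, Ed1, Ec1.
    repeat first [rewrite RtoC_minus | rewrite RtoC_mult | rewrite RtoC_pow].
    cbn [Cpow]. field. auto.
Qed.

Lemma Cmod_a2_le (D t : R) (a2 c2 d2 : C) :
  (0 < t)%R -> D <> 0%R -> (Cmod c2 <= 1)%R -> (Cmod d2 <= 1)%R ->
  a2 * a2 * RtoC D = 4 * RtoC t ^ 3 * (c2 + d2) ->
  (Cmod a2 <= 2 * t * sqrt (2 * t) / sqrt (Rabs D))%R.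
Proof.
  intros Ht HD Hc2 Hd2 E. pose proof (Cmod_ge_0 a2).
  assert (HDp : (0 < Rabs D)%R) by (apply Rabs_pos_lt; auto).
  assert (Hsq : (Cmod a2 * Cmod a2 * Rabs D <= 8 * t ^ 3)%R).
  { rewrite <- Cmod_R, <- !Cmod_mult, E, !Cmod_mult, Cmod_pow, Cmod_R, Rabs_pos_eq by lra.
    pose proof (Cmod_triangle c2 d2). rewrite Cmod_R, Rabs_pos_eq by lra.
    assert (0 <= t ^ 3)%R by (apply pow_le; lra). nra. }
  assert (Hs : (0 < sqrt (Rabs D))%R) by (apply sqrt_lt_R0; auto).
  apply (Rmult_le_reg_r (sqrt (Rabs D))); auto.
  unfold Rdiv. rewrite Rmult_assoc, Rinv_l, Rmult_1_r by lra.
  apply Rsqr_incr_0_var; [|apply Rmult_le_pos; [lra|apply sqrt_pos]].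
  unfold Rsqr. replace (Cmod a2 * sqrt (Rabs D) * (Cmod a2 * sqrt (Rabs D)))%R
    with (Cmod a2 * Cmod a2 * (sqrt (Rabs D) * sqrt (Rabs D)))%R by ring.
  replace (2 * t * sqrt (2 * t) * (2 * t * sqrt (2 * t)))%R
    with (4 * t * t * (sqrt (2 * t) * sqrt (2 * t)))%R by ring.
  rewrite !sqrt_sqrt by lra. simpl in Hsq. nra.
Qed.

Lemma Cmod_a3_le (A B t : R) (a2 a3 c1 c2 d2 : C) :
  (0 < t)%R -> (0 < A)%R -> (0 < B)%R ->
  (Cmod c1 <= 1)%R -> (Cmod c2 <= 1)%R -> (Cmod d2 <= 1)%R ->
  RtoC A * a2 = 2 * RtoC t * c1 -> a3 = a2 * a2 + RtoC t * (c2 - d2) / RtoC B ->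
  (Cmod a3 <= 4 * t ^ 2 / A ^ 2 + 2 * t / B)%R.
Proof.
  intros Ht HA HB Hc1 Hc2 Hd2 E1 E3.
  assert (Ha2 : (Cmod a2 <= 2 * t / A)%R).
  { replace a2 with (2 * RtoC t * c1 / RtoC A) by (rewrite <- E1; field; apply RtoC_neq0; lra).
    rewrite Cmod_div by (apply RtoC_neq0; lra).
    rewrite !Cmod_mult, !Cmod_R, !Rabs_pos_eq by lra.
    unfold Rdiv. apply Rmult_le_compat_r; [apply Rlt_le, Rinv_0_lt_compat; lra|]. nra. }
  rewrite E3. eapply Rle_trans; [apply Cmod_triangle|].
  rewrite Cmod_div, Cmod_mult, Cmod_mult, !Cmod_R, !Rabs_pos_eq by (lra || (apply RtoC_neq0; lra)).
  assert (Hcd : (Cmod (c2 - d2) <= 2)%R).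
  { unfold Cminus. eapply Rle_trans; [apply Cmod_triangle|]. rewrite Cmod_opp. lra. }
  pose proof (Cmod_ge_0 a2).
  assert (Cmod a2 * Cmod a2 <= 4 * t ^ 2 / A ^ 2)%R.
  { replace (4 * t ^ 2 / A ^ 2)%R with ((2 * t / A) * (2 * t / A))%R by (field; lra).
    apply Rmult_le_compat; lra. }
  assert (t * Cmod (c2 - d2) / B <= 2 * t / B)%R.
  { unfold Rdiv. apply Rmult_le_compat_r; [apply Rlt_le, Rinv_0_lt_compat; lra|]. nra. }
  lra.
Qed.

Lemma xi_nonneg (lam mu : R) : (1 <= lam)%R -> (0 <= mu)%R -> (0 <= xi lam mu)%R.
Proof.
  intros Hl Hm. unfold xi. apply Rmult_le_pos; [lra|]. apply Rlt_le, Rinv_0_lt_compat. lra.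
Qed.

Theorem theorem1 (lam mu del t : R) (f : C -> C) (a : nat -> C) :
  (1 <= lam)%R -> (0 <= mu)%R -> (0 <= del)%R -> (1/2 < t < 1)%R ->
  in_A f a -> classB mu lam del t f ->
  let A := (lam + mu + 2 * xi lam mu * del)%R in
  let D := (A ^ 2 - 2 * (2 * A ^ 2 - (2 * lam + mu) * (mu + 1)
                          - 12 * xi lam mu * del) * t ^ 2)%R in
  (D <> 0%R ->
     (Cmod (a 2%nat) <= 2 * t * sqrt (2 * t) / sqrt (Rabs D))%R) /\
  (Cmod (a 3%nat) <= 4 * t ^ 2 / A ^ 2
                     + 2 * t / (2 * lam + mu + 6 * xi lam mu * del))%R.
Proof.
  intros Hl Hm Hd Ht Hfa [[Huf _] [Hopf [g [Hloc [[b Hb] [_ Hopg]]]]]] A D.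
  pose proof Hfa as [Hf [Ha0 Ha1]].
  destruct (inverse_coefs f a g b Hfa Huf Hloc Hb) as [Hb0 [Hb1 [Hb2 Hb3]]].
  destruct (op_subord_coefs lam mu del t f a Ht Hf Ha0 Ha1 Hopf) as [c1 [c2 [Hc1 [Hc2 [E1 E2]]]]].
  destruct (op_subord_coefs lam mu del t g b Ht Hb Hb0 Hb1 Hopg) as [d1 [d2 [Hd1 [Hd2 [E3 E4]]]]].
  rewrite Hb2 in E3, E4. rewrite Hb3 in E4.
  set (B := (2 * lam + mu + 6 * xi lam mu * del)%R) in *.
  set (K := ((mu - 1) * (mu + 2 * lam) / 2)%R) in *.
  assert (HA : (1 <= A)%R) by (pose proof (xi_nonneg lam mu Hl Hm); unfold A; nra).
  assert (HB : (2 <= B)%R) by (pose proof (xi_nonneg lam mu Hl Hm); unfold B; nra).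
  destruct (bi_coef_system A B K t (a 2%nat) (a 3%nat) c1 c2 d1 d2 ltac:(lra) ltac:(lra) ltac:(lra)
    E1 E2 E3 E4)
    as [Ea3 Ea2].
  replace (A ^ 2 - 2 * (2 * A ^ 2 - 2 * B - 2 * K) * t ^ 2)%R with D in Ea2
    by (unfold D, B, K; field).
  split.
  - intros HD. apply (Cmod_a2_le D t (a 2%nat) c2 d2); auto; lra.
  - apply (Cmod_a3_le A B t (a 2%nat) (a 3%nat) c1 c2 d2); auto; lra.
Qed.
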